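(* If $s>0$ is small enough, then for every $1\le i\le n-1$ and $1\le j\le D_i$ there is a critical point $w_{i,j}\in\mathbb{C}\setminus\{0\}$ of $P_n$ (a solution of $\sum_{k=1}^{n-1}\frac{(-1)^{k-1}D_kz^{D_k}}{z^{D_k}-a_k^{D_k}}+(-1)^{n-1}d_n-\frac{(d_1-1)d_1z^{d_1}}{(d_1-1)z^{d_1}+1}=0$) such that $|w_{i,j}-\widetilde w_{i,j}|<s^{1/2}|a_i|$, where $\widetilde w_{i,j}=r_ia_ie^{\pi\mathrm{i}(2j-1)/D_i}$ and $r_i=(d_{i+1}/d_i)^{1/D_i}$.
   Context: $n\ge2$, $d_1,\dots,d_n$ positive integers with $\sum 1/d_i<1$, $d_{\max}=\max_i d_i$, $D_i=d_i+d_{i+1}$. $s>0$, $a_i\in\mathbb{C}$ with $|a_1|=(d_{\max}^2s)^{1/d_1}$, $|a_i|=s^{1/d_i}|a_{i-1}|$. $C_n=\sum_{i=1}^{n-1}\frac{(-1)^{i-1}D_ia_i^{D_i}}{1-a_i^{D_i}}$, $B_n=C_n/(1+C_n)$, $A_n=\frac{1}{1+C_n}\prod_{i=1}^{n-1}(1-a_i^{D_i})^{(-1)^i}$, $P_n(z)=A_n\frac{d_1z^{(-1)^{n-1}d_n}}{(d_1-1)z^{d_1}+1}\prod_{i=1}^{n-1}(z^{D_i}-a_i^{D_i})^{(-1)^{i-1}}+B_n$. *)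

From Stdlib Require Import Reals Lra Lia.
Open Scope R_scope.

Record Cx := mkC { Re : R; Im : R }.

Definition RtoC (x : R) : Cx := mkC x 0.
Definition C0 : Cx := RtoC 0.
Definition C1 : Cx := RtoC 1.
Definition Cadd (z w : Cx) : Cx := mkC (Re z + Re w) (Im z + Im w).
Definition Copp (z : Cx) : Cx := mkC (- Re z) (- Im z).
Definition Csub (z w : Cx) : Cx := Cadd z (Copp w).
Definition Cmul (z w : Cx) : Cx :=
  mkC (Re z * Re w - Im z * Im w) (Re z * Im w + Im z * Re w).
Definition Cinv (z : Cx) : Cx :=
  let r := Re z * Re z + Im z * Im z in mkC (Re z / r) (- Im z / r).
Definition Cdiv (z w : Cx) : Cx := Cmul z (Cinv w).
Fixpoint Cpow (z : Cx) (k : nat) : Cx :=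
  match k with O => C1 | S k' => Cmul z (Cpow z k') end.
Definition Cnorm (z : Cx) : R := sqrt (Re z * Re z + Im z * Im z).
Definition Cexpi (theta : R) : Cx := mkC (cos theta) (sin theta).

Fixpoint Csum1 (f : nat -> Cx) (m : nat) : Cx :=
  match m with O => C0 | S m' => Cadd (Csum1 f m') (f m) end.
Fixpoint Rsum1 (f : nat -> R) (m : nat) : R :=
  match m with O => 0 | S m' => Rsum1 f m' + f m end.
Fixpoint nmax1 (d : nat -> nat) (m : nat) : nat :=
  match m with O => O | S m' => Nat.max (nmax1 d m') (d m) end.

Definition Dd (d : nat -> nat) (i : nat) : nat := (d i + d (S i))%nat.

Definition crit_lhs (n : nat) (d : nat -> nat) (a : nat -> Cx) (z : Cx) : Cx :=
  Csub
    (Cadd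
      (Csum1 (fun k => Cdiv
                (Cmul (RtoC ((-1) ^ (k - 1) * INR (Dd d k))) (Cpow z (Dd d k)))
                (Csub (Cpow z (Dd d k)) (Cpow (a k) (Dd d k)))) (n - 1))
      (RtoC ((-1) ^ (n - 1) * INR (d n))))
    (Cdiv (Cmul (RtoC ((INR (d 1%nat) - 1) * INR (d 1%nat))) (Cpow z (d 1%nat)))
          (Cadd (Cmul (RtoC (INR (d 1%nat) - 1)) (Cpow z (d 1%nat))) C1)).

Definition is_crit_point (n : nat) (d : nat -> nat) (a : nat -> Cx) (z : Cx) : Prop :=
  z <> C0 /\
  (forall k, (1 <= k <= n - 1)%nat -> Csub (Cpow z (Dd d k)) (Cpow (a k) (Dd d k)) <> C0) /\
  Cadd (Cmul (RtoC (INR (d 1%nat) - 1)) (Cpow z (d 1%nat))) C1 <> C0 /\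
  crit_lhs n d a z = C0.

(** The predicted point [w] solves [w^(D_i) = - (d_(i+1)/d_i) a_i^(D_i)].
    The moduli [|a_k|] shrink by the factors [s^(1/d_k)], so near [w] every
    other point [a_k] lives on a very different scale: for [k < i] the
    summand [D_k z^(D_k)/(z^(D_k) - a_k^(D_k))] is tiny, for [k > i] it is
    close to its limit [D_k], and the last summand is tiny.  These limits
    telescope with the constant [(-1)^(n-1) d_n], and writing [z = w (1 + t)]
    the equation becomes [(1 + t)^(D_i) = 1 + resid t], where [resid] is of
    size [O(s)] and has Lipschitz constant [O(s)] on a disk [|t| <= 2G],
    [G = O(s)].  Banach's fixed point theorem on that disk solves it, and
    then [|z - w| = |w| |t| = O(s) |a_i| < sqrt s |a_i|]. *)

From Stdlib Require Import Reals Lra Lia.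
From Coquelicot Require Import Coquelicot.
From Pilot Require Import Defs.
Open Scope R_scope.

(** The statement uses a bare record [Cx]; Coquelicot's [C] has the same
    carrier together with a field structure and the modulus [Cmod]. *)
Definition toC (z : Cx) : C := (Defs.Re z, Defs.Im z).

Lemma toC_inj z w : toC z = toC w -> z = w.
Proof. destruct z, w; unfold toC; simpl; intros H; inversion H; auto. Qed.

Lemma toC_RtoC r : toC (Defs.RtoC r) = Complex.RtoC r.
Proof. reflexivity. Qed.
Lemma toC_C1 : toC C1 = 1%C. Proof. reflexivity. Qed.
Lemma toC_add z w : toC (Cadd z w) = (toC z + toC w)%C. Proof. reflexivity. Qed.
Lemma toC_sub z w : toC (Csub z w) = (toC z - toC w)%C. Proof. reflexivity. Qed.
Lemma toC_mul z w : toC (Cmul z w) = (toC z * toC w)%C. Proof. reflexivity. Qed.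

Lemma toC_div z w : toC (Defs.Cdiv z w) = (toC z / toC w)%C.
Proof.
  unfold Defs.Cdiv, Complex.Cdiv. rewrite toC_mul. f_equal.
  unfold toC, Defs.Cinv, Complex.Cinv; simpl. f_equal; f_equal; ring.
Qed.

Lemma toC_pow z k : toC (Defs.Cpow z k) = (toC z ^ k)%C.
Proof. induction k; simpl; [reflexivity|]. rewrite toC_mul, IHk. reflexivity. Qed.

Lemma Cnorm_toC z : Cnorm z = Cmod (toC z).
Proof. unfold Cnorm, Cmod, toC; simpl. f_equal; ring. Qed.

Lemma toC_expi th : toC (Cexpi th) = (cos th, sin th).
Proof. reflexivity. Qed.

Fixpoint Csum (f : nat -> C) (m : nat) : C :=
  match m with O => 0%C | S m' => (Csum f m' + f m)%C end.

Lemma toC_sum f m : toC (Csum1 f m) = Csum (fun k => toC (f k)) m.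
Proof. induction m; simpl; [reflexivity|]. rewrite toC_add, IHm. reflexivity. Qed.

Lemma Csum_ext f g N : (forall k, (1 <= k <= N)%nat -> f k = g k) -> Csum f N = Csum g N.
Proof.
  induction N; intros H; simpl; auto.
  rewrite IHN by (intros; apply H; lia). rewrite H by lia. reflexivity.
Qed.

Lemma Csum_add f g N : Csum (fun k => f k + g k)%C N = (Csum f N + Csum g N)%C.
Proof. induction N; simpl; [ring|]. rewrite IHN. ring. Qed.

Lemma Csum_delta (x : C) i N : (1 <= i <= N)%nat ->
  Csum (fun k => if Nat.eqb k i then x else 0%C) N = x.
Proof.
  assert (Hzero : forall M, (M < i)%nat -> Csum (fun k => if Nat.eqb k i then x else 0%C) M = 0%C).
  { induction M; intros HM; [reflexivity|]. cbn [Csum]. rewrite IHM by lia.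
    destruct (Nat.eqb_spec (S M) i); [lia|ring]. }
  induction N; intros H; [lia|]. cbn [Csum].
  destruct (Nat.eqb_spec (S N) i).
  - subst. rewrite Hzero by lia. ring.
  - rewrite IHN by lia. ring.
Qed.

Lemma Csum_real (h : nat -> R) N :
  Csum (fun k => Complex.RtoC (h k)) N = Complex.RtoC (Rsum1 h N).
Proof. induction N; simpl; [reflexivity|]. rewrite IHN, RtoC_plus. reflexivity. Qed.

Lemma Cmod_sub_sym x y : Cmod (x - y)%C = Cmod (y - x)%C.
Proof. replace (y - x)%C with (- (x - y))%C by ring. now rewrite Cmod_opp. Qed.

Lemma Cmod_sub_ge x y : Cmod x - Cmod y <= Cmod (x - y)%C.
Proof.
  assert (H := Cmod_triangle (x - y)%C y).
  replace (x - y + y)%C with x in H by ring. lra.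
Qed.

Lemma Cmod_sub_le x y : Cmod (x - y)%C <= Cmod x + Cmod y.
Proof. unfold Cminus. rewrite <- (Cmod_opp y). apply Cmod_triangle. Qed.

Lemma Cmod_one_plus t r : Cmod t <= r -> Cmod (1 + t)%C <= 1 + r.
Proof. intros H. eapply Rle_trans; [apply Cmod_triangle|]. rewrite Cmod_1. lra. Qed.

Lemma Cmod_INR D : Cmod (INR D) = INR D.
Proof. rewrite Cmod_R. apply Rabs_pos_eq, pos_INR. Qed.

Lemma Cmod_le_sum (c : C) : Cmod c <= Rabs (fst c) + Rabs (snd c).
Proof.
  destruct c as [a b]. unfold Cmod; simpl.
  rewrite <- (sqrt_square (Rabs a + Rabs b)) by (assert (H1 := Rabs_pos a); assert (H2 := Rabs_pos b); lra).
  apply sqrt_le_1_alt.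
  assert (H1 := Rabs_pos a). assert (H2 := Rabs_pos b).
  assert (Ha : a * a = Rabs a * Rabs a) by (rewrite <- Rabs_mult; symmetry; apply Rabs_pos_eq; nra).
  assert (Hb : b * b = Rabs b * Rabs b) by (rewrite <- Rabs_mult; symmetry; apply Rabs_pos_eq; nra).
  nra.
Qed.

Lemma Cpow_lipschitz m (z z' : C) R : Cmod z <= R -> Cmod z' <= R ->
  Cmod (z ^ (S m) - z' ^ (S m))%C <= INR (S m) * R ^ m * Cmod (z - z')%C.
Proof.
  intros Hz Hz'. assert (HR : 0 <= R) by (eapply Rle_trans; [apply Cmod_ge_0|eauto]).
  induction m.
  - simpl. replace (z * 1 - z' * 1)%C with (z - z')%C by ring. lra.
  - replace (z ^ S (S m) - z' ^ S (S m))%C with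
      (z * (z ^ S m - z' ^ S m) + z' ^ S m * (z - z'))%C by (simpl; ring).
    eapply Rle_trans; [apply Cmod_triangle|]. rewrite !Cmod_mult, Cmod_pow.
    assert (H1 : Cmod z * Cmod (z ^ S m - z' ^ S m)%C
                 <= R * (INR (S m) * R ^ m * Cmod (z - z')%C)).
    { apply Rmult_le_compat; auto using Cmod_ge_0. }
    assert (H2 : Cmod z' ^ S m * Cmod (z - z')%C <= R ^ S m * Cmod (z - z')%C).
    { apply Rmult_le_compat_r; [apply Cmod_ge_0|]. apply pow_incr. split; auto using Cmod_ge_0. }
    rewrite (S_INR (S m)). simpl in *. nra.
Qed.

(** * The contraction principle on a closed disk *)

Lemma half_pow_small c e : 0 <= c -> 0 < e ->
  exists N, forall k, (N <= k)%nat -> c * (/2)^k < e.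
Proof.
  intros Hc He.
  destruct (pow_lt_1_zero (/2)) with (y := e / (c + 1)) as [N HN].
  { rewrite Rabs_pos_eq; lra. }
  { apply Rdiv_lt_0_compat; lra. }
  exists N. intros k Hk. specialize (HN k Hk).
  rewrite Rabs_pos_eq in HN by (apply pow_le; lra).
  assert (0 <= (/2)^k) by (apply pow_le; lra).
  apply (Rmult_lt_compat_l (c + 1)) in HN; [|lra].
  replace ((c + 1) * (e / (c + 1))) with e in HN by (field; lra). nra.
Qed.

Lemma le_of_forall_eps a b : (forall e, 0 < e -> a <= b + e) -> a <= b.
Proof. intros H. destruct (Rle_dec a b); auto. specialize (H ((a - b) / 2)). lra. Qed.

Lemma le_of_geometric a b c : 0 <= c -> (forall k, a <= b + c * (/2)^k) -> a <= b.
Proof.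
  intros Hc H. apply le_of_forall_eps. intros e He.
  destruct (half_pow_small c e Hc He) as [N HN].
  specialize (H N). specialize (HN N (le_n N)). lra.
Qed.

Lemma geometric_cauchy_limit (x : nat -> C) c : 0 <= c ->
  (forall k m, (k <= m)%nat -> Cmod (x m - x k)%C <= c * (/2)^k) ->
  exists l, forall k, Cmod (x k - l)%C <= c * (/2)^k.
Proof.
  intros Hc Hx.
  assert (Hcomp : forall g : C -> R, (forall z, Rabs (g z) <= Cmod z) ->
            (forall z z', g (z - z')%C = g z - g z') -> Cauchy_crit (fun k => g (x k))).
  { intros g Hg Hlin e He. destruct (half_pow_small c e Hc He) as [N HN].
    exists N. intros p q Hp Hq. unfold R_dist. rewrite <- Hlin.
    eapply Rle_lt_trans; [apply Hg|].
    destruct (Nat.le_ge_cases p q).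
    - rewrite Cmod_sub_sym. eapply Rle_lt_trans; [apply Hx; auto|]. apply HN; lia.
    - eapply Rle_lt_trans; [apply Hx; auto|]. apply HN; lia. }
  destruct (Rcomplete.R_complete _ (Hcomp fst
    ltac:(intros z; eapply Rle_trans; [apply Rmax_l|apply Rmax_Cmod])
    ltac:(intros [] []; reflexivity))) as [l1 Hl1].
  destruct (Rcomplete.R_complete _ (Hcomp snd
    ltac:(intros z; eapply Rle_trans; [apply Rmax_r|apply Rmax_Cmod])
    ltac:(intros [] []; reflexivity))) as [l2 Hl2].
  exists (l1, l2). intros k. apply le_of_forall_eps. intros e He.
  destruct (Hl1 (e/2)) as [N1 HN1]; [lra|]. destruct (Hl2 (e/2)) as [N2 HN2]; [lra|].
  set (m := (k + N1 + N2)%nat).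
  specialize (HN1 m ltac:(unfold m; lia)). specialize (HN2 m ltac:(unfold m; lia)).
  unfold R_dist in HN1, HN2.
  replace (x k - (l1, l2))%C with ((x k - x m) + (x m - (l1, l2)))%C by ring.
  eapply Rle_trans; [apply Cmod_triangle|].
  rewrite (Cmod_sub_sym (x k)).
  assert (Hd := Hx k m ltac:(unfold m; lia)).
  assert (Hl := Cmod_le_sum (x m - (l1, l2))%C).
  replace (fst (x m - (l1, l2))%C) with (fst (x m) - l1) in Hl by (destruct (x m); reflexivity).
  replace (snd (x m - (l1, l2))%C) with (snd (x m) - l2) in Hl by (destruct (x m); reflexivity).
  lra.
Qed.

Section Contraction.

Variables (Phi : C -> C) (r : R).
Hypothesis Hr : 0 <= r.
Hypothesis Hmaps : forall t, Cmod t <= r -> Cmod (Phi t) <= r.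
Hypothesis Hcontr : forall t t', Cmod t <= r -> Cmod t' <= r ->
  Cmod (Phi t - Phi t')%C <= /2 * Cmod (t - t')%C.

Fixpoint picard (k : nat) : C :=
  match k with O => 0%C | S k' => Phi (picard k') end.

Lemma picard_in_disk k : Cmod (picard k) <= r.
Proof. induction k; simpl; [rewrite Cmod_0; lra|]. now apply Hmaps. Qed.

Lemma picard_step k : Cmod (picard (S k) - picard k)%C <= r * (/2)^k.
Proof.
  induction k.
  - simpl. replace (Phi 0%C - 0)%C with (Phi 0%C) by ring. rewrite Rmult_1_r.
    apply Hmaps. rewrite Cmod_0. lra.
  - change (Cmod (Phi (picard (S k)) - Phi (picard k))%C <= r * (/2)^(S k)).
    eapply Rle_trans; [apply Hcontr; apply picard_in_disk|]. simpl in *. nra.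
Qed.

Lemma picard_cauchy k m : (k <= m)%nat ->
  Cmod (picard m - picard k)%C <= 2 * r * (/2)^k.
Proof.
  intros Hkm. replace m with (k + (m - k))%nat by lia.
  assert (Hsum : forall p, Cmod (picard (k + p) - picard k)%C <= 2 * r * (/2)^k * (1 - (/2)^p)).
  { induction p.
    - rewrite Nat.add_0_r. replace (picard k - picard k)%C with (0 : C) by ring.
      rewrite Cmod_0. simpl. lra.
    - replace (picard (k + S p) - picard k)%C
        with ((picard (S (k + p)) - picard (k + p)) + (picard (k + p) - picard k))%C
        by (rewrite Nat.add_succ_r; ring).
      eapply Rle_trans; [apply Cmod_triangle|].
      assert (H1 := picard_step (k + p)). rewrite pow_add in H1. simpl in *. lra. }
  eapply Rle_trans; [apply Hsum|].
  assert (0 <= (/2)^(m - k)) by (apply pow_le; lra).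
  assert (0 <= r * (/2)^k * (/2)^(m - k)) by (apply Rmult_le_pos; [apply Rmult_le_pos|]; auto; apply pow_le; lra).
  nra.
Qed.

Lemma contraction_fixed_point : exists t, Cmod t <= r /\ Phi t = t.
Proof.
  destruct (geometric_cauchy_limit picard (2 * r)) as [l Hl]; [lra|exact picard_cauchy|].
  assert (Hlr : Cmod l <= r).
  { apply (le_of_geometric _ _ (2 * r)); [lra|]. intros k.
    assert (H := Cmod_sub_ge l (picard k)). rewrite Cmod_sub_sym in H.
    assert (H1 := Hl k). assert (H2 := picard_in_disk k). lra. }
  exists l. split; auto.
  assert (Hfix : Cmod (Phi l - l)%C <= 0).
  { apply (le_of_geometric _ _ (2 * r)); [lra|]. intros k.
    replace (Phi l - l)%C with ((Phi l - Phi (picard k)) + (picard (S k) - l))%C by (simpl; ring).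
    eapply Rle_trans; [apply Cmod_triangle|].
    assert (H1 := Hcontr l (picard k) Hlr (picard_in_disk k)).
    rewrite (Cmod_sub_sym l) in H1.
    assert (H2 := Hl (S k)). assert (H3 := Hl k). change ((/2)^(S k)) with (/2 * (/2)^k) in H2. lra. }
  replace (Phi l) with ((Phi l - l) + l)%C by ring.
  rewrite (Cmod_eq_0 _ (Rle_antisym _ _ Hfix (Cmod_ge_0 _))). ring.
Qed.

End Contraction.

(** * Roots of a perturbed power equation *)

Lemma pow_one_plus_le_2 D r : 0 <= r -> INR D * r <= /2 -> (1 + r)^D <= 2.
Proof.
  intros Hr H.
  assert (Hbern : (1 + r)^D * (1 - INR D * r) <= 1).
  { clear H. induction D; [simpl; lra|]. rewrite S_INR. simpl.
    assert (0 <= (1 + r)^D) by (apply pow_le; lra).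
    assert (0 <= INR D) by apply pos_INR.
    assert (0 <= (1 + r)^D * r * r * (INR D + 1)) by (repeat apply Rmult_le_pos; lra).
    nra. }
  assert (0 <= (1 + r)^D) by (apply pow_le; lra). nra.
Qed.

Definition binom_rem (D : nat) (t : C) : C := ((1 + t)^D - 1 - INR D * t)%C.

Lemma binom_rem_succ D t : binom_rem (S D) t = ((1 + t) * binom_rem D t + INR D * t^2)%C.
Proof. unfold binom_rem. rewrite S_INR, RtoC_plus. simpl. ring. Qed.

Lemma binom_rem_bound D t r : Cmod t <= r ->
  Cmod (binom_rem D t) <= INR D ^ 2 * r ^ 2 * (1 + r)^D.
Proof.
  intros Ht. assert (Hr : 0 <= r) by (eapply Rle_trans; [apply Cmod_ge_0|eauto]).
  induction D.
  - unfold binom_rem. replace ((1 + t) ^ 0 - 1 - INR 0 * t)%C with (0 : C) by (simpl; ring).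
    rewrite Cmod_0. simpl; lra.
  - rewrite binom_rem_succ. eapply Rle_trans; [apply Cmod_triangle|].
    rewrite !Cmod_mult, Cmod_INR, Cmod_pow.
    assert (H1 := Cmod_one_plus t r Ht).
    assert (H2 : Cmod (1 + t)%C * Cmod (binom_rem D t) <= (1 + r) * (INR D ^ 2 * r ^ 2 * (1 + r) ^ D)).
    { apply Rmult_le_compat; auto using Cmod_ge_0. }
    assert (H3 : Cmod t ^ 2 <= r ^ 2) by (apply pow_incr; split; auto using Cmod_ge_0).
    assert (HB : 1 <= (1 + r)^D) by (apply pow_R1_Rle; lra).
    assert (0 <= INR D) by apply pos_INR.
    rewrite S_INR. replace ((1 + r)^(S D)) with ((1 + r) * (1 + r)^D) by reflexivity.
    set (B := (1 + r)^D) in *.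
    assert (Hq : INR D * Cmod t ^ 2 <= INR D * r ^ 2) by (apply Rmult_le_compat_l; lra).
    assert (0 <= r^2) by (apply pow2_ge_0).
    assert (0 <= r ^ 2 * (1 + r) * B * INR D) by (repeat apply Rmult_le_pos; lra).
    assert (0 <= r ^ 2 * INR D * (B * (1 + r) - 1)) by (repeat apply Rmult_le_pos; nra).
    assert (0 <= r ^ 2 * (1 + r) * B) by (repeat apply Rmult_le_pos; lra).
    nra.
Qed.

Lemma binom_rem_lipschitz D t t' r : Cmod t <= r -> Cmod t' <= r -> INR D * r <= 1 ->
  Cmod (binom_rem D t - binom_rem D t')%C <= 3 * INR D ^ 2 * r * (1 + r)^D * Cmod (t - t')%C.
Proof.
  intros Ht Ht'. assert (Hr : 0 <= r) by (eapply Rle_trans; [apply Cmod_ge_0|eauto]).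
  induction D; intros HD.
  - unfold binom_rem.
    replace ((1 + t) ^ 0 - 1 - INR 0 * t - ((1 + t') ^ 0 - 1 - INR 0 * t'))%C
      with (0 : C) by (simpl; ring).
    rewrite Cmod_0. simpl. lra.
  - assert (HD' : INR D * r <= 1) by (rewrite S_INR in HD; nra).
    specialize (IHD HD').
    replace (binom_rem (S D) t - binom_rem (S D) t')%C with
      ((1 + t) * (binom_rem D t - binom_rem D t') + (t - t') * binom_rem D t'
       + INR D * (t + t') * (t - t'))%C
      by (rewrite !binom_rem_succ; simpl; ring).
    eapply Rle_trans; [apply Cmod_triangle|].
    eapply Rle_trans; [apply Rplus_le_compat_r, Cmod_triangle|].
    rewrite !Cmod_mult, Cmod_INR.
    assert (H1 := Cmod_one_plus t r Ht).
    set (dd := Cmod (t - t')%C). assert (Hdd : 0 <= dd) by apply Cmod_ge_0.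
    assert (HB : 1 <= (1 + r)^D) by (apply pow_R1_Rle; lra).
    assert (0 <= INR D) by apply pos_INR.
    assert (H2 : Cmod (1 + t)%C * Cmod (binom_rem D t - binom_rem D t')%C
                 <= (1 + r) * (3 * INR D ^ 2 * r * (1 + r) ^ D * dd)).
    { apply Rmult_le_compat; auto using Cmod_ge_0. }
    assert (H3 : dd * Cmod (binom_rem D t') <= dd * (INR D ^ 2 * r ^ 2 * (1 + r)^D)).
    { apply Rmult_le_compat_l; auto. apply binom_rem_bound; auto. }
    assert (H4 : Cmod (t + t')%C <= 2 * r) by (eapply Rle_trans; [apply Cmod_triangle|lra]).
    assert (H5 : INR D * Cmod (t + t')%C * dd <= INR D * (2 * r) * dd).
    { apply Rmult_le_compat_r; auto. apply Rmult_le_compat_l; auto. }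
    rewrite S_INR. simpl in *.
    assert (0 <= INR D * r * r * dd * (1 + r)^D) by (repeat apply Rmult_le_pos; lra).
    assert (0 <= r * dd * (1 + r)^D * (1 + r)) by (repeat apply Rmult_le_pos; lra).
    assert (0 <= INR D * r * dd * (1 + r)^D * r) by (repeat apply Rmult_le_pos; lra).
    assert (0 <= INR D * r * dd * (1 + r)^D) by (repeat apply Rmult_le_pos; lra).
    assert (0 <= INR D * r * dd * ((1 + r)^D - 1)) by (repeat apply Rmult_le_pos; lra).
    nra.
Qed.

Section PerturbedRoot.

Variables (D : nat) (r : R) (e : C -> C).
Hypothesis HD : (1 <= D)%nat.
Hypothesis Hr : 0 <= r.
Hypothesis HDr : INR D * r <= /24.
Hypothesis He : forall t, Cmod t <= r -> Cmod (e t) <= INR D * r / 2.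
Hypothesis Hel : forall t t', Cmod t <= r -> Cmod t' <= r ->
  Cmod (e t - e t')%C <= INR D / 4 * Cmod (t - t')%C.

(** [(1 + t)^D = 1 + e t] is the fixed-point equation of [root_map]. *)
Definition root_map (t : C) : C := ((e t - binom_rem D t) / INR D)%C.

Lemma INR_D_bounds : 1 <= INR D /\ 1 <= (1 + r)^D <= 2.
Proof.
  split; [apply (le_INR 1); auto|]. split; [apply pow_R1_Rle; lra|].
  apply pow_one_plus_le_2; [lra|].
  assert (1 <= INR D) by (apply (le_INR 1); auto). nra.
Qed.

Lemma div_INR_D_bound x y : Cmod x <= y * INR D -> Cmod (x / INR D)%C <= y.
Proof.
  intros Hxy. destruct INR_D_bounds as [HD1 _].
  assert (HDnz : Complex.RtoC (INR D) <> 0%C) by (intros H; apply (f_equal fst) in H; simpl in H; lra).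
  rewrite Cmod_div, Cmod_INR by auto.
  apply Rmult_le_reg_r with (INR D); [lra|]. unfold Rdiv.
  rewrite Rmult_assoc, Rinv_l, Rmult_1_r by lra. exact Hxy.
Qed.

Lemma root_map_maps t : Cmod t <= r -> Cmod (root_map t) <= r.
Proof.
  intros Ht. destruct INR_D_bounds as [HD1 [HB1 HB]]. apply div_INR_D_bound.
  eapply Rle_trans; [apply Cmod_sub_le|].
  assert (H1 := He t Ht). assert (H2 := binom_rem_bound D t r Ht).
  assert (Hx : 0 <= INR D * r) by nra.
  assert ((INR D * r) * (1 + r) ^ D <= /24 * 2) by (apply Rmult_le_compat; lra).
  assert ((INR D * r) * ((INR D * r) * (1 + r) ^ D) <= (INR D * r) * (/24 * 2))
    by (apply Rmult_le_compat_l; lra).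
  replace (INR D ^ 2 * r ^ 2 * (1 + r) ^ D) with ((INR D * r) * ((INR D * r) * (1 + r) ^ D))
    in H2 by ring.
  lra.
Qed.

Lemma root_map_contracts t t' : Cmod t <= r -> Cmod t' <= r ->
  Cmod (root_map t - root_map t')%C <= /2 * Cmod (t - t')%C.
Proof.
  intros Ht Ht'. destruct INR_D_bounds as [HD1 [HB1 HB]].
  assert (HDnz : Complex.RtoC (INR D) <> 0%C) by (intros H; apply (f_equal fst) in H; simpl in H; lra).
  unfold root_map.
  replace ((e t - binom_rem D t) / INR D - (e t' - binom_rem D t') / INR D)%C with
    (((e t - e t') - (binom_rem D t - binom_rem D t')) / INR D)%C by (field; auto).
  apply div_INR_D_bound. eapply Rle_trans; [apply Cmod_sub_le|].
  assert (H1 := Hel t t' Ht Ht'). assert (H2 := binom_rem_lipschitz D t t' r Ht Ht' ltac:(lra)).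
  set (dd := Cmod (t - t')%C) in *. assert (0 <= dd) by apply Cmod_ge_0.
  assert (0 <= INR D * r) by nra.
  assert (0 <= INR D * dd * (INR D * r)) by (repeat apply Rmult_le_pos; lra).
  assert (0 <= INR D * dd) by (repeat apply Rmult_le_pos; lra).
  simpl in *. nra.
Qed.

Lemma perturbed_root : exists t, Cmod t <= r /\ ((1 + t)^D = 1 + e t)%C.
Proof.
  destruct INR_D_bounds as [HD1 _].
  assert (HDnz : Complex.RtoC (INR D) <> 0%C) by (intros H; apply (f_equal fst) in H; simpl in H; lra).
  destruct (contraction_fixed_point root_map r Hr root_map_maps root_map_contracts)
    as [t [Ht Hfix]].
  exists t. split; auto.
  assert (Hfix' : (e t - binom_rem D t)%C = (t * INR D)%C).
  { transitivity (root_map t * INR D)%C; [unfold root_map; field; auto|]. now rewrite Hfix. }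
  unfold binom_rem in Hfix'.
  transitivity (((1 + t) ^ D - 1 - INR D * t) + 1 + INR D * t)%C; [ring|].
  replace ((1 + t) ^ D - 1 - INR D * t)%C with (e t - t * INR D)%C by (rewrite <- Hfix'; ring).
  ring.
Qed.

End PerturbedRoot.

(** Points [w (1 + t)] with [|t| <= 1/2]; the critical point will be found
    in this form, [w] being its predicted position. *)
Definition near (w t : C) : C := (w * (1 + t))%C.

Lemma near_bounds w t : Cmod t <= /2 ->
  Cmod w / 2 <= Cmod (near w t) /\ Cmod (near w t) <= 2 * Cmod w.
Proof.
  intros Ht. unfold near. rewrite Cmod_mult.
  assert (H1 := Cmod_one_plus t (/2) Ht).
  assert (H2 := Cmod_sub_ge 1 (- t)%C). replace (1 - - t)%C with (1 + t)%C in H2 by ring.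
  rewrite Cmod_opp, Cmod_1 in H2.
  assert (0 <= Cmod w) by apply Cmod_ge_0. split; nra.
Qed.

Lemma near_dist w t t' : Cmod (near w t - near w t')%C = Cmod w * Cmod (t - t')%C.
Proof. unfold near. rewrite <- Cmod_mult. f_equal. ring. Qed.

Lemma div_le a b A B : 0 <= a <= A -> 0 < B <= b -> a / b <= A / B.
Proof.
  intros [Ha HA] [HB Hb]. unfold Rdiv. apply Rmult_le_compat; auto.
  - left; apply Rinv_0_lt_compat; lra.
  - apply Rinv_le_contravar; lra.
Qed.

(** The difference of two quotients [x/(x - b)] (or [b/(x - b)]) at
    [x = z^D] and [x = z'^D] is [b (z'^D - z^D) / ((z^D - b)(z'^D - b))];
    this bounds it when both denominators are at least [mu]. *)
Lemma quotient_gap_bound (w b : C) m (mu : R) t t' : 0 < mu ->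
  Cmod t <= /2 -> Cmod t' <= /2 ->
  mu <= Cmod (near w t ^ S m - b)%C -> mu <= Cmod (near w t' ^ S m - b)%C ->
  Cmod (b * (near w t' ^ S m - near w t ^ S m)
          / ((near w t ^ S m - b) * (near w t' ^ S m - b)))%C
  <= Cmod b * (INR (S m) * (2 * Cmod w) ^ m * Cmod w * Cmod (t - t')%C) / (mu * mu).
Proof.
  intros Hmu Ht Ht' H1 H2.
  assert (N1 : (near w t ^ S m - b)%C <> 0%C) by (intros E; rewrite E, Cmod_0 in H1; lra).
  assert (N2 : (near w t' ^ S m - b)%C <> 0%C) by (intros E; rewrite E, Cmod_0 in H2; lra).
  rewrite Cmod_div by (apply Cmult_neq_0; auto). rewrite !Cmod_mult.
  apply div_le.
  - split; [apply Rmult_le_pos; apply Cmod_ge_0|].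
    apply Rmult_le_compat_l; [apply Cmod_ge_0|].
    destruct (near_bounds w t Ht). destruct (near_bounds w t' Ht').
    rewrite Cmod_sub_sym, Rmult_assoc, <- near_dist. apply Cpow_lipschitz; auto.
  - split; [nra|]. apply Rmult_le_compat; lra.
Qed.

(** [f] is bounded by [lam] and [lam]-Lipschitz on the disk [|t| <= 1/2]:
    the form in which all perturbation terms are controlled. *)
Definition tame (f : C -> C) (lam : R) : Prop :=
  forall t t', Cmod t <= /2 -> Cmod t' <= /2 ->
    Cmod (f t) <= lam /\ Cmod (f t - f t')%C <= lam * Cmod (t - t')%C.

Lemma inner_term_estimates w b m ka :
  0 < Cmod w -> 0 <= ka <= /2 -> (2 * Cmod w) ^ S m <= ka * Cmod b ->
  (forall t, Cmod t <= /2 -> (near w t ^ S m - b)%C <> 0%C) /\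
  tame (fun t => near w t ^ S m / (near w t ^ S m - b))%C (2 * INR (S m) * ka).
Proof.
  intros Hw Hka Hb.
  assert (Hpos : 0 < (2 * Cmod w) ^ S m) by (apply pow_lt; lra).
  assert (Hbp : 0 < Cmod b) by nra.
  assert (Hden : forall s, Cmod s <= /2 ->
            Cmod (near w s ^ S m) <= (2 * Cmod w) ^ S m /\
            /2 * Cmod b <= Cmod (near w s ^ S m - b)%C).
  { intros s Hs. destruct (near_bounds w s Hs) as [_ Z].
    assert (Hp : Cmod (near w s ^ S m) <= (2 * Cmod w) ^ S m).
    { rewrite Cmod_pow. apply pow_incr. split; auto using Cmod_ge_0. }
    split; auto. rewrite Cmod_sub_sym. assert (H := Cmod_sub_ge b (near w s ^ S m)). nra. }
  assert (Hnz : forall s, Cmod s <= /2 -> (near w s ^ S m - b)%C <> 0%C).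
  { intros s Hs E. destruct (Hden s Hs) as [_ H]. rewrite E, Cmod_0 in H. lra. }
  assert (Hratio : (2 * Cmod w) ^ S m / Cmod b <= ka).
  { apply Rmult_le_reg_r with (Cmod b); auto. unfold Rdiv. rewrite Rmult_assoc, Rinv_l; lra. }
  assert (HSm : 1 <= INR (S m)) by (rewrite S_INR; assert (H := pos_INR m); lra).
  split; [exact Hnz|]. intros t t' Ht Ht'.
  destruct (Hden t Ht) as [P1 D1]. destruct (Hden t' Ht') as [_ D2].
  assert (N1 := Hnz t Ht). assert (N2 := Hnz t' Ht').
  split.
  - rewrite Cmod_div by auto.
    apply Rle_trans with ((2 * Cmod w) ^ S m / (/2 * Cmod b)).
    + apply div_le; split; auto using Cmod_ge_0; lra.
    + replace ((2 * Cmod w) ^ S m / (/2 * Cmod b)) with (2 * ((2 * Cmod w) ^ S m / Cmod b))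
        by (field; lra). nra.
  - replace (near w t ^ S m / (near w t ^ S m - b) - near w t' ^ S m / (near w t' ^ S m - b))%C
      with (b * (near w t' ^ S m - near w t ^ S m)
              / ((near w t ^ S m - b) * (near w t' ^ S m - b)))%C by (field; auto).
    eapply Rle_trans; [apply (quotient_gap_bound w b m (/2 * Cmod b)); auto; lra|].
    replace (Cmod b * (INR (S m) * (2 * Cmod w) ^ m * Cmod w * Cmod (t - t')%C)
               / (/2 * Cmod b * (/2 * Cmod b)))
      with (2 * INR (S m) * ((2 * Cmod w) ^ S m / Cmod b) * Cmod (t - t')%C)
      by (rewrite <- tech_pow_Rmult; field; lra).
    apply Rmult_le_compat_r; [apply Cmod_ge_0|].
    apply Rmult_le_compat_l; auto. assert (0 <= INR (S m)) by apply pos_INR. lra.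
Qed.

Lemma outer_term_estimates w b m ka :
  0 < Cmod w -> 0 <= ka <= /2 -> Cmod b <= ka * (Cmod w / 2) ^ S m ->
  (forall t, Cmod t <= /2 -> (near w t ^ S m - b)%C <> 0%C) /\
  tame (fun t => b / (near w t ^ S m - b))%C (2 * INR (S m) * 4 ^ S m * ka).
Proof.
  intros Hw Hka Hb.
  assert (Hpos : 0 < (Cmod w / 2) ^ S m) by (apply pow_lt; lra).
  assert (Hden : forall s, Cmod s <= /2 ->
            /2 * (Cmod w / 2) ^ S m <= Cmod (near w s ^ S m - b)%C).
  { intros s Hs. destruct (near_bounds w s Hs) as [Z _].
    assert (Hp : (Cmod w / 2) ^ S m <= Cmod (near w s ^ S m)).
    { rewrite Cmod_pow. apply pow_incr. split; auto. lra. }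
    assert (H := Cmod_sub_ge (near w s ^ S m) b). nra. }
  assert (Hnz : forall s, Cmod s <= /2 -> (near w s ^ S m - b)%C <> 0%C).
  { intros s Hs E. assert (H := Hden s Hs). rewrite E, Cmod_0 in H. lra. }
  assert (Hratio : Cmod b / (Cmod w / 2) ^ S m <= ka).
  { apply Rmult_le_reg_r with ((Cmod w / 2) ^ S m); auto.
    unfold Rdiv. rewrite Rmult_assoc, Rinv_l; lra. }
  assert (HSm : 1 <= INR (S m) * 4 ^ S m).
  { assert (1 <= INR (S m)) by (rewrite S_INR; assert (H := pos_INR m); lra).
    assert (1 <= 4 ^ S m) by (apply pow_R1_Rle; lra). nra. }
  split; [exact Hnz|]. intros t t' Ht Ht'.
  assert (D1 := Hden t Ht). assert (D2 := Hden t' Ht').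
  assert (N1 := Hnz t Ht). assert (N2 := Hnz t' Ht').
  split.
  - rewrite Cmod_div by auto.
    apply Rle_trans with (Cmod b / (/2 * (Cmod w / 2) ^ S m)).
    + apply div_le; split; auto using Cmod_ge_0; lra.
    + replace (Cmod b / (/2 * (Cmod w / 2) ^ S m)) with (2 * (Cmod b / (Cmod w / 2) ^ S m))
        by (field; lra). nra.
  - replace (b / (near w t ^ S m - b) - b / (near w t' ^ S m - b))%C
      with (b * (near w t' ^ S m - near w t ^ S m)
              / ((near w t ^ S m - b) * (near w t' ^ S m - b)))%C by (field; auto).
    eapply Rle_trans; [apply (quotient_gap_bound w b m (/2 * (Cmod w / 2) ^ S m)); auto; lra|].
    replace (Cmod b * (INR (S m) * (2 * Cmod w) ^ m * Cmod w * Cmod (t - t')%C)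
               / (/2 * (Cmod w / 2) ^ S m * (/2 * (Cmod w / 2) ^ S m)))
      with (2 * INR (S m) * 4 ^ S m * (Cmod b / (Cmod w / 2) ^ S m) * Cmod (t - t')%C).
    + apply Rmult_le_compat_r; [apply Cmod_ge_0|].
      apply Rmult_le_compat_l; auto.
      assert (0 <= INR (S m)) by apply pos_INR. assert (0 < 4 ^ S m) by (apply pow_lt; lra). nra.
    + replace (2 * Cmod w) with (4 * (Cmod w / 2)) by field.
      rewrite Rpow_mult_distr, <- !tech_pow_Rmult. field.
      split; [apply pow_nonzero|]; lra.
Qed.

Lemma tame_nonneg f lam : tame f lam -> 0 <= lam.
Proof.
  intros Hf. destruct (Hf 0%C 0%C) as [H _]; try (rewrite Cmod_0; lra).
  eapply Rle_trans; [apply Cmod_ge_0|exact H].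
Qed.

Lemma tame_mono f lam lam' : lam <= lam' -> tame f lam -> tame f lam'.
Proof.
  intros Hl Hf t t' Ht Ht'. destruct (Hf t t' Ht Ht') as [H1 H2].
  assert (0 <= Cmod (t - t')%C) by apply Cmod_ge_0. split; nra.
Qed.

Lemma tame_ext f g lam : (forall t, Cmod t <= /2 -> f t = g t) -> tame f lam -> tame g lam.
Proof. intros E Hf t t' Ht Ht'. rewrite <- !E by auto. now apply Hf. Qed.

Lemma tame_const0 lam : 0 <= lam -> tame (fun _ => 0%C) lam.
Proof.
  intros Hl t t' _ _. replace (0 - 0)%C with (0 : C) by ring. rewrite Cmod_0.
  assert (0 <= Cmod (t - t')%C) by apply Cmod_ge_0. split; nra.
Qed.

Lemma tame_scale c f M lam : Cmod c <= M -> tame f lam -> tame (fun t => c * f t)%C (M * lam).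
Proof.
  intros Hc Hf t t' Ht Ht'. destruct (Hf t t' Ht Ht') as [H1 H2].
  assert (Hl := tame_nonneg f lam Hf). assert (0 <= Cmod c) by apply Cmod_ge_0.
  replace (c * f t - c * f t')%C with (c * (f t - f t'))%C by ring.
  rewrite !Cmod_mult. split.
  - apply Rmult_le_compat; auto using Cmod_ge_0.
  - rewrite Rmult_assoc. apply Rmult_le_compat; auto using Cmod_ge_0.
Qed.

Lemma tame_add f g l1 l2 : tame f l1 -> tame g l2 -> tame (fun t => f t + g t)%C (l1 + l2).
Proof.
  intros Hf Hg t t' Ht Ht'.
  destruct (Hf t t' Ht Ht') as [F1 F2]. destruct (Hg t t' Ht Ht') as [G1 G2].
  replace (f t + g t - (f t' + g t'))%C with ((f t - f t') + (g t - g t'))%C by ring.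
  split; (eapply Rle_trans; [apply Cmod_triangle|]); lra.
Qed.

Lemma tame_sub f g l1 l2 : tame f l1 -> tame g l2 -> tame (fun t => f t - g t)%C (l1 + l2).
Proof.
  intros Hf Hg. apply (tame_add f (fun t => - g t)%C); auto.
  replace l2 with (1 * l2) by ring. apply (tame_ext (fun t => (-1) * g t)%C).
  - intros t _. ring.
  - apply tame_scale; auto. rewrite Cmod_R, Rabs_left by lra. lra.
Qed.

Lemma tame_sum f N lam : 0 <= lam -> (forall k, (1 <= k <= N)%nat -> tame (f k) lam) ->
  tame (fun t => Csum (fun k => f k t) N) (INR N * lam).
Proof.
  intros Hl Hf. induction N; simpl Csum.
  - rewrite Rmult_0_l. now apply tame_const0.
  - rewrite S_INR, Rmult_plus_distr_r, Rmult_1_l.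
    apply (tame_add (fun t => Csum (fun k => f k t) N) (f (S N))).
    + apply IHN. intros k Hk. apply Hf. lia.
    + apply Hf. lia.
Qed.

(** * The critical-point equation and its decomposition *)

Definition sgn (k : nat) : R := (-1) ^ (k - 1).

Lemma sgn_sq i : sgn i * sgn i = 1.
Proof.
  unfold sgn. rewrite <- pow_add. replace (i - 1 + (i - 1))%nat with (2 * (i - 1))%nat by lia.
  rewrite pow_mult. replace ((-1)^2) with 1 by ring. apply pow1.
Qed.

Lemma sgn_succ i : (1 <= i)%nat -> sgn (S i) = - sgn i.
Proof. intros H. unfold sgn. replace (S i - 1)%nat with (S (i - 1)) by lia. simpl. ring. Qed.

Lemma Cmod_sgn_coef k D : Cmod (Complex.RtoC (sgn k * INR D)) = INR D.
Proof.
  rewrite Cmod_R, Rabs_mult, (Rabs_pos_eq (INR D)) by apply pos_INR.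
  unfold sgn. rewrite pow_1_abs. ring.
Qed.

Definition crit_term (d : nat -> nat) (A : nat -> C) (k : nat) (z : C) : C :=
  (Complex.RtoC (sgn k * INR (Dd d k)) * z ^ Dd d k / (z ^ Dd d k - A k ^ Dd d k))%C.

Definition last_term (d : nat -> nat) (z : C) : C :=
  (Complex.RtoC ((INR (d 1%nat) - 1) * INR (d 1%nat)) * z ^ d 1%nat /
     (Complex.RtoC (INR (d 1%nat) - 1) * z ^ d 1%nat + 1))%C.

Definition crit (n : nat) (d : nat -> nat) (A : nat -> C) (z : C) : C :=
  (Csum (fun k => crit_term d A k z) (n - 1) + Complex.RtoC (sgn n * INR (d n))
   - last_term d z)%C.

Lemma crit_toC n d a z : toC (crit_lhs n d a z) = crit n d (fun k => toC (a k)) (toC z).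
Proof.
  unfold crit_lhs, crit, last_term.
  rewrite toC_sub, toC_add, toC_sum, toC_div, toC_mul, toC_add, toC_mul, !toC_RtoC, toC_pow, toC_C1.
  f_equal. f_equal. apply Csum_ext. intros k Hk.
  unfold crit_term, sgn. rewrite toC_div, toC_mul, toC_RtoC, toC_sub, !toC_pow. reflexivity.
Qed.

(** Near the circle [|z| = r_i |a_i|] only the [i]-th summand is of size
    one.  The other summands [k > i] tend to their limit [sgn k D_k]; the
    perturbation term of index [k] is what remains after subtracting it. *)
Definition pert_term (d : nat -> nat) (A : nat -> C) (i k : nat) (z : C) : C :=
  if Nat.ltb k i then crit_term d A k z
  else if Nat.eqb k i then 0%C
  else (Complex.RtoC (sgn k * INR (Dd d k)) * (A k ^ Dd d k / (z ^ Dd d k - A k ^ Dd d k)))%C.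

Definition pert (n : nat) (d : nat -> nat) (A : nat -> C) (i : nat) (z : C) : C :=
  (Csum (fun k => pert_term d A i k z) (n - 1) - last_term d z)%C.

Lemma telescope (d : nat -> nat) i N : (i <= N)%nat ->
  Rsum1 (fun k => if Nat.ltb i k then sgn k * INR (Dd d k) else 0) N + sgn (S N) * INR (d (S N))
  = sgn (S i) * INR (d (S i)).
Proof.
  intros H. induction N.
  - assert (i = 0%nat) by lia. subst. simpl. ring.
  - destruct (Nat.eq_dec i (S N)).
    + subst. clear IHN H.
      assert (Hz : forall M, (M <= S N)%nat ->
                Rsum1 (fun k => if Nat.ltb (S N) k then sgn k * INR (Dd d k) else 0) M = 0).
      { induction M; intros HM; simpl; [reflexivity|]. rewrite IHM by lia.
        destruct (Nat.ltb_spec (S N) (S M)); [lia|lra]. }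
      rewrite Hz by lia. lra.
    + specialize (IHN ltac:(lia)). simpl Rsum1.
      destruct (Nat.ltb_spec i (S N)); [|lia].
      unfold sgn, Dd in *. rewrite plus_INR.
      replace (S (S N) - 1)%nat with (S (S N - 1)) by lia.
      replace (S N - 1)%nat with N by lia.
      replace (S N - 1)%nat with N in IHN by lia. simpl pow. simpl pow in IHN.
      lra.
Qed.

Lemma crit_decomp n d A i z : (1 <= i <= n - 1)%nat ->
  (forall k, (1 <= k <= n - 1)%nat -> (i < k)%nat -> (z ^ Dd d k - A k ^ Dd d k)%C <> 0%C) ->
  crit n d A z = (pert n d A i z + crit_term d A i z + Complex.RtoC (sgn (S i) * INR (d (S i))))%C.
Proof.
  intros Hi Hnz. unfold crit, pert.
  rewrite (Csum_ext (fun k => crit_term d A k z)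
     (fun k => pert_term d A i k z + ((if Nat.eqb k i then crit_term d A i z else 0%C)
        + Complex.RtoC (if Nat.ltb i k then sgn k * INR (Dd d k) else 0)))%C).
  - rewrite !Csum_add, Csum_delta, Csum_real by lia.
    rewrite <- (telescope d i (n - 1)) by lia.
    replace (S (n - 1)) with n by lia. rewrite RtoC_plus. ring.
  - intros k Hk. unfold pert_term.
    destruct (Nat.ltb_spec k i); destruct (Nat.eqb_spec k i); destruct (Nat.ltb_spec i k); try lia.
    + ring.
    + subst. ring.
    + assert (Hz := Hnz k Hk ltac:(lia)). unfold crit_term. field. auto.
Qed.

(** Scale separation between [w] and the points [a_k], [k <> i], measured
    by [ka]: the circles [|z| = |a_k|] stay far from [w] in the scale that
    matters for the summand of index [k]. *)
Definition separated (d : nat -> nat) (A : nat -> C) (i k : nat) (w : C) (ka : R) : Prop :=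
  ((k < i)%nat -> (2 * Cmod w) ^ Dd d k <= ka * Cmod (A k ^ Dd d k)%C) /\
  ((i < k)%nat -> Cmod (A k ^ Dd d k)%C <= ka * (Cmod w / 2) ^ Dd d k).

Section SeparatedTerm.

Variables (d : nat -> nat) (A : nat -> C) (i k : nat) (w : C) (ka M : R) (E : nat).
Hypothesis Hw : 0 < Cmod w.
Hypothesis Hka : 0 <= ka <= /2.
Hypothesis HM : 1 <= M.
Hypothesis HDM : INR (Dd d k) <= M.
Hypothesis HDE : (1 <= Dd d k <= E)%nat.
Hypothesis Hsep : separated d A i k w ka.

Lemma separated_nonvanishing : k <> i ->
  forall t, Cmod t <= /2 -> (near w t ^ Dd d k - A k ^ Dd d k)%C <> 0%C.
Proof.
  intros Hki. destruct Hsep as [Hlt Hgt].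
  assert (HD : Dd d k = S (Dd d k - 1)) by lia. rewrite HD in Hlt, Hgt |- *.
  assert (Hk : (k < i \/ i < k)%nat) by lia. destruct Hk as [Hk|Hk].
  - exact (proj1 (inner_term_estimates w _ _ ka Hw Hka (Hlt Hk))).
  - exact (proj1 (outer_term_estimates w _ _ ka Hw Hka (Hgt Hk))).
Qed.

Lemma pert_term_tame : tame (fun t => pert_term d A i k (near w t)) (2 * M * M * 4 ^ E * ka).
Proof.
  destruct Hsep as [Hlt Hgt].
  assert (HD : Dd d k = S (Dd d k - 1)) by lia.
  set (m := (Dd d k - 1)%nat) in HD.
  assert (HmE : (S m <= E)%nat) by lia.
  unfold pert_term, crit_term. rewrite HD in Hlt, Hgt, HDM |- *.
  assert (H4 : 4 ^ S m <= 4 ^ E) by (apply Rle_pow; lra || lia).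
  assert (H4' : 1 <= 4 ^ S m) by (apply pow_R1_Rle; lra).
  assert (Hm0 : 0 <= INR (S m)) by apply pos_INR.
  assert (Hcoef : Cmod (Complex.RtoC (sgn k * INR (S m))) <= M) by (rewrite Cmod_sgn_coef; lra).
  destruct (Nat.ltb_spec k i) as [Hki|Hki].
  - destruct (inner_term_estimates w (A k ^ S m) m ka Hw Hka (Hlt Hki)) as [_ Htame].
    apply (tame_ext (fun t => Complex.RtoC (sgn k * INR (S m))
             * (near w t ^ S m / (near w t ^ S m - A k ^ S m)))%C).
    { intros t _. unfold Complex.Cdiv. ring. }
    apply (tame_mono _ (M * (2 * INR (S m) * ka))); [|now apply tame_scale].
    assert (0 <= M * ka * (M * 4 ^ E - INR (S m))) by (apply Rmult_le_pos; nra). nra.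
  - destruct (Nat.eqb_spec k i).
    + apply tame_const0. assert (0 <= M * M * 4 ^ E) by (apply Rmult_le_pos; nra). nra.
    + destruct (outer_term_estimates w (A k ^ S m) m ka Hw Hka (Hgt ltac:(lia))) as [_ Htame].
      apply (tame_mono _ (M * (2 * INR (S m) * 4 ^ S m * ka))); [|now apply tame_scale].
      assert (INR (S m) * 4 ^ S m <= M * 4 ^ E) by (apply Rmult_le_compat; lra).
      assert (0 <= M * ka * (M * 4 ^ E - INR (S m) * 4 ^ S m)) by (apply Rmult_le_pos; nra).
      nra.
Qed.

End SeparatedTerm.

(** The last summand is [d_1 z^(d_1) / (z^(d_1) + 1/(d_1 - 1))]: an inner term. *)
Lemma last_term_estimates d w ka M :
  0 < Cmod w -> 0 <= ka <= /2 -> INR (d 1%nat) <= M -> (2 <= d 1%nat)%nat ->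
  (2 * Cmod w) ^ d 1%nat * (INR (d 1%nat) - 1) <= ka ->
  (forall t, Cmod t <= /2 ->
     (Complex.RtoC (INR (d 1%nat) - 1) * near w t ^ d 1%nat + 1)%C <> 0%C) /\
  tame (fun t => last_term d (near w t)) (2 * M * M * ka).
Proof.
  intros Hw Hka HM Hd1 Hsmall.
  assert (Hq : 1 <= INR (d 1%nat) - 1) by (assert (2 <= INR (d 1%nat)) by (apply (le_INR 2); lia); lra).
  unfold last_term.
  set (q := INR (d 1%nat) - 1) in *.
  set (bL := Complex.RtoC (- / q)).
  assert (HbL : Cmod bL = / q).
  { unfold bL. rewrite Cmod_R, Rabs_Ropp, Rabs_pos_eq; auto. left; apply Rinv_0_lt_compat; lra. }
  assert (Hqnz : Complex.RtoC q <> 0%C) by (intros E0; apply (f_equal fst) in E0; simpl in E0; lra).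
  assert (Hfact : forall z, (Complex.RtoC q * z + 1)%C = (Complex.RtoC q * (z - bL))%C).
  { intros z. unfold bL. rewrite RtoC_opp, RtoC_inv by lra. field. auto. }
  assert (HD : d 1%nat = S (d 1%nat - 1)) by lia. rewrite HD in Hsmall, HM |- *.
  set (m := (d 1%nat - 1)%nat) in *.
  assert (Hb : (2 * Cmod w) ^ S m <= ka * Cmod bL).
  { rewrite HbL. apply Rmult_le_reg_r with q; [lra|]. rewrite Rmult_assoc, Rinv_l by lra. lra. }
  destruct (inner_term_estimates w bL m ka Hw Hka Hb) as [Hnz Htame].
  split.
  - intros t Ht. rewrite Hfact. apply Cmult_neq_0; auto.
  - apply (tame_ext (fun t => Complex.RtoC (INR (S m)) * (near w t ^ S m / (near w t ^ S m - bL)))%C).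
    { intros t Ht. rewrite Hfact, RtoC_mult. field. split; auto. }
    apply (tame_mono _ (M * (2 * INR (S m) * ka))).
    + assert (0 <= INR (S m)) by apply pos_INR.
      assert (0 <= M * ka * (M - INR (S m))) by (apply Rmult_le_pos; [apply Rmult_le_pos|]; lra).
      nra.
    + apply tame_scale; auto. rewrite Cmod_INR. exact HM.
Qed.

Lemma pert_tame n d A i w (ka M : R) (E : nat) :
  0 < Cmod w -> 0 <= ka <= /2 -> 1 <= M -> (1 <= n)%nat ->
  (forall k, (1 <= k <= n - 1)%nat ->
     INR (Dd d k) <= M /\ (1 <= Dd d k <= E)%nat /\ separated d A i k w ka) ->
  INR (d 1%nat) <= M -> (2 <= d 1%nat)%nat ->
  (2 * Cmod w) ^ d 1%nat * (INR (d 1%nat) - 1) <= ka ->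
  tame (fun t => pert n d A i (near w t)) (INR n * (2 * M * M * 4 ^ E * ka)).
Proof.
  intros Hw Hka HM Hn Hk HL1 HL2 HL3.
  destruct (last_term_estimates d w ka M Hw Hka HL1 HL2 HL3) as [_ Hlast].
  assert (H4 : 1 <= 4 ^ E) by (apply pow_R1_Rle; lra).
  assert (Hlam : 0 <= 2 * M * M * 4 ^ E * ka).
  { assert (0 <= M * M * 4 ^ E) by (apply Rmult_le_pos; nra). nra. }
  apply (tame_mono _ (INR (n - 1) * (2 * M * M * 4 ^ E * ka) + 2 * M * M * ka)).
  - rewrite minus_INR by lia. simpl INR.
    assert (0 <= M * M * ka * (4 ^ E - 1)) by (apply Rmult_le_pos; nra). nra.
  - apply tame_sub; auto. apply tame_sum; auto.
    intros k Hk'. destruct (Hk k Hk') as [H1 [H2 H3]].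
    now apply (pert_term_tame d A i k w ka M E).
Qed.

Lemma dominant_balance (eps u a Z c s dI dJ : C) :
  (s * s = 1)%C -> (c * dI = dJ)%C -> dJ <> 0%C -> a <> 0%C -> (c * u + 1)%C <> 0%C ->
  Z = (- (c * a * u))%C -> u = (1 + - (s * eps * (c * u + 1) / dJ))%C ->
  (eps + s * (dI + dJ) * Z / (Z - a) + - s * dJ)%C = 0%C.
Proof.
  intros Hs Hc HdJ Ha Hcu HZ Hu.
  assert (Heps : eps = (- (s * (u - 1) * dJ / (c * u + 1)))%C).
  { rewrite Hu at 1. transitivity (s * s * eps)%C; [rewrite Hs; ring|]. field; auto. }
  assert (HZa : (Z - a)%C = (- (a * (c * u + 1)))%C) by (rewrite HZ; ring).
  rewrite HZa, Heps, HZ, <- Hc. field. split; auto.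
Qed.

Section Core.

(** [w] solves the unperturbed equation [w^(D_i) = - c a_i^(D_i)] with
    [c = d_(i+1) / d_i]; the scales of all other points are separated from
    [|w|] by [ka], and [G] dominates the resulting size of the perturbation. *)
Variables (n : nat) (d : nat -> nat) (A : nat -> C) (i : nat) (w : C) (c ka M G : R) (E : nat).
Hypothesis Hi : (1 <= i <= n - 1)%nat.
Hypothesis Hn : (2 <= n)%nat.
Hypothesis Hw : 0 < Cmod w.
Hypothesis Hwpow : (w ^ Dd d i = - (Complex.RtoC c * A i ^ Dd d i))%C.
Hypothesis Hc : 0 < c <= M.
Hypothesis Hcd : c * INR (d i) = INR (d (S i)).
Hypothesis HdS : (1 <= d (S i))%nat.
Hypothesis Hka : 0 <= ka <= /2.
Hypothesis HM : 1 <= M.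
Hypothesis HDM : INR (Dd d i) <= M.
Hypothesis HD1 : (1 <= Dd d i)%nat.
Hypothesis Hsep : forall k, (1 <= k <= n - 1)%nat ->
  INR (Dd d k) <= M /\ (1 <= Dd d k <= E)%nat /\ separated d A i k w ka.
Hypothesis HL1 : INR (d 1%nat) <= M.
Hypothesis HL2 : (2 <= d 1%nat)%nat.
Hypothesis HL3 : (2 * Cmod w) ^ d 1%nat * (INR (d 1%nat) - 1) <= ka.
Hypothesis HG1 : 5 * M * M * (INR n * (2 * M * M * 4 ^ E * ka)) <= G.
Hypothesis HG2 : 2 * M * G <= /24.

(** The equation [crit (near w t) = 0] rewritten as [(1 + t)^(D_i) = 1 + resid t]. *)
Definition resid (t : C) : C :=
  (- (Complex.RtoC (sgn i) / Complex.RtoC (INR (d (S i))))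
   * (pert n d A i (near w t) * (Complex.RtoC c * (1 + t) ^ Dd d i + 1)))%C.

Lemma G_bounds : 0 <= INR n * (2 * M * M * 4 ^ E * ka) /\ 0 <= G <= /48.
Proof.
  assert (H4 : 1 <= 4 ^ E) by (apply pow_R1_Rle; lra).
  assert (0 <= M * M * 4 ^ E) by (apply Rmult_le_pos; nra).
  assert (2 <= INR n) by (apply (le_INR 2); lia).
  assert (0 <= INR n * (2 * M * M * 4 ^ E * ka)) by (apply Rmult_le_pos; nra).
  split; [auto|]. split; nra.
Qed.

Lemma dS_nonzero : Complex.RtoC (INR (d (S i))) <> 0%C.
Proof.
  intros E0. apply (f_equal fst) in E0. simpl in E0.
  assert (H := le_INR 1 _ HdS). simpl in H. lra.
Qed.

Lemma unit_power_bounds t t' : Cmod t <= 2 * G -> Cmod t' <= 2 * G ->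
  Cmod ((1 + t) ^ Dd d i)%C <= 2 /\
  Cmod ((1 + t) ^ Dd d i - (1 + t') ^ Dd d i)%C <= 2 * M * Cmod (t - t')%C.
Proof.
  intros Ht Ht'. destruct G_bounds as [_ HG].
  assert (HB : forall p, (p <= Dd d i)%nat -> (1 + 2 * G) ^ p <= 2).
  { intros p Hp. apply pow_one_plus_le_2; [lra|].
    assert (INR p <= M) by (eapply Rle_trans; [apply le_INR, Hp|exact HDM]). nra. }
  split.
  - rewrite Cmod_pow. eapply Rle_trans; [|apply (HB _ (le_n _))].
    apply pow_incr. split; [apply Cmod_ge_0|]. now apply Cmod_one_plus.
  - assert (HD : Dd d i = S (Dd d i - 1)) by lia. rewrite HD.
    eapply Rle_trans; [apply (Cpow_lipschitz _ (1 + t)%C (1 + t')%C (1 + 2 * G));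
                       now apply Cmod_one_plus|].
    replace (1 + t - (1 + t'))%C with (t - t')%C by ring. rewrite <- HD.
    assert ((1 + 2 * G) ^ (Dd d i - 1) <= 2) by (apply HB; lia).
    assert (0 <= (1 + 2 * G) ^ (Dd d i - 1)) by (apply pow_le; lra).
    assert (0 <= Cmod (t - t')%C) by apply Cmod_ge_0.
    assert (INR (Dd d i) * (1 + 2 * G) ^ (Dd d i - 1) <= M * 2)
      by (apply Rmult_le_compat; auto using pos_INR).
    nra.
Qed.

Lemma resid_coef_bound :
  Cmod (- (Complex.RtoC (sgn i) / Complex.RtoC (INR (d (S i)))))%C <= 1.
Proof.
  assert (HdJ : 1 <= INR (d (S i))) by (apply (le_INR 1); auto).
  rewrite Cmod_opp, Cmod_div by exact dS_nonzero.
  rewrite !Cmod_R, (Rabs_pos_eq (INR _)) by lra. unfold sgn. rewrite pow_1_abs.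
  apply Rmult_le_reg_r with (INR (d (S i))); [lra|].
  unfold Rdiv. rewrite Rmult_1_l, Rinv_l by lra. lra.
Qed.

Lemma affine_power_bound t : Cmod t <= 2 * G ->
  Cmod (Complex.RtoC c * (1 + t) ^ Dd d i + 1)%C <= 3 * M.
Proof.
  intros Ht. destruct (unit_power_bounds t t Ht Ht) as [U _].
  eapply Rle_trans; [apply Cmod_triangle|].
  rewrite Cmod_mult, Cmod_1, Cmod_R, Rabs_pos_eq by lra.
  assert (c * Cmod ((1 + t) ^ Dd d i)%C <= M * 2) by (apply Rmult_le_compat; auto using Cmod_ge_0; lra).
  lra.
Qed.

Lemma resid_estimates t t' : Cmod t <= 2 * G -> Cmod t' <= 2 * G ->
  Cmod (resid t) <= G /\ Cmod (resid t - resid t')%C <= G * Cmod (t - t')%C.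
Proof.
  intros Ht Ht'. destruct G_bounds as [Hlam HG].
  set (lam := INR n * (2 * M * M * 4 ^ E * ka)) in *.
  assert (Hpert := pert_tame n d A i w ka M E Hw Hka HM ltac:(lia) Hsep HL1 HL2 HL3).
  destruct (Hpert t t' ltac:(lra) ltac:(lra)) as [P1 P2].
  destruct (Hpert t' t' ltac:(lra) ltac:(lra)) as [P3 _].
  destruct (unit_power_bounds t t' Ht Ht') as [_ U2].
  assert (HK := resid_coef_bound). assert (Hcu := affine_power_bound t Ht).
  unfold resid.
  set (K := (- (Complex.RtoC (sgn i) / Complex.RtoC (INR (d (S i)))))%C) in *.
  set (p := pert n d A i (near w t)) in *. set (p' := pert n d A i (near w t')) in *.
  set (u := ((1 + t) ^ Dd d i)%C) in *. set (u' := ((1 + t') ^ Dd d i)%C) in *.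
  set (dd := Cmod (t - t')%C) in *. assert (Hdd : 0 <= dd) by apply Cmod_ge_0.
  assert (0 <= Cmod K) by apply Cmod_ge_0.
  split.
  - rewrite !Cmod_mult.
    assert (Cmod p * Cmod (Complex.RtoC c * u + 1)%C <= lam * (3 * M))
      by (apply Rmult_le_compat; auto using Cmod_ge_0).
    assert (0 <= Cmod p * Cmod (Complex.RtoC c * u + 1)%C) by (apply Rmult_le_pos; apply Cmod_ge_0).
    nra.
  - replace (K * (p * (Complex.RtoC c * u + 1)) - K * (p' * (Complex.RtoC c * u' + 1)))%C
      with (K * ((p - p') * (Complex.RtoC c * u + 1) + p' * Complex.RtoC c * (u - u')))%C by ring.
    rewrite Cmod_mult.
    assert (X1 : Cmod ((p - p') * (Complex.RtoC c * u + 1))%C <= (lam * dd) * (3 * M))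
      by (rewrite Cmod_mult; apply Rmult_le_compat; auto using Cmod_ge_0).
    assert (X2 : Cmod (p' * Complex.RtoC c * (u - u'))%C <= lam * M * (2 * M * dd)).
    { rewrite !Cmod_mult, Cmod_R, Rabs_pos_eq by lra.
      apply Rmult_le_compat; auto using Cmod_ge_0.
      - apply Rmult_le_pos; [apply Cmod_ge_0|lra].
      - apply Rmult_le_compat; auto using Cmod_ge_0; lra. }
    assert (X3 := Cmod_triangle ((p - p') * (Complex.RtoC c * u + 1))%C (p' * Complex.RtoC c * (u - u'))%C).
    assert (X4 : lam * dd * (3 * M) + lam * M * (2 * M * dd) <= G * dd).
    { assert (0 <= lam * dd * M * (3 * M - 3))
        by (apply Rmult_le_pos; [apply Rmult_le_pos; [apply Rmult_le_pos|]|]; lra).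
      assert (0 <= (G - 5 * M * M * lam) * dd) by (apply Rmult_le_pos; lra). nra. }
    assert (0 <= Cmod ((p - p') * (Complex.RtoC c * u + 1) + p' * Complex.RtoC c * (u - u'))%C)
      by apply Cmod_ge_0.
    nra.
Qed.

Lemma near_pow t : (near w t ^ Dd d i = - (Complex.RtoC c * A i ^ Dd d i * (1 + t) ^ Dd d i))%C.
Proof. unfold near. rewrite Cpow_mult_l, Hwpow. ring. Qed.

Lemma Ai_pow_nonzero : (A i ^ Dd d i)%C <> 0%C.
Proof.
  intros E0. rewrite E0, Cmult_0_r in Hwpow.
  assert (H := f_equal Cmod Hwpow). rewrite Cmod_pow, Cmod_opp, Cmod_0 in H.
  assert (0 < Cmod w ^ Dd d i) by (apply pow_lt; lra). lra.
Qed.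

Lemma root_denominators t : Cmod t <= 2 * G -> ((1 + t) ^ Dd d i = 1 + resid t)%C ->
  (Complex.RtoC c * (1 + t) ^ Dd d i + 1)%C <> 0%C /\
  (forall k, (1 <= k <= n - 1)%nat -> (near w t ^ Dd d k - A k ^ Dd d k)%C <> 0%C).
Proof.
  intros Ht Hroot. destruct G_bounds as [_ HG].
  assert (Hres := proj1 (resid_estimates t t Ht Ht)).
  assert (Hcu : (Complex.RtoC c * (1 + t) ^ Dd d i + 1)%C <> 0%C).
  { intros E0. assert (Hx := Cmod_sub_ge (Complex.RtoC (c + 1)) (- (Complex.RtoC c * resid t))%C).
    replace (Complex.RtoC (c + 1) - - (Complex.RtoC c * resid t))%C
      with (Complex.RtoC c * (1 + t) ^ Dd d i + 1)%C in Hx by (rewrite Hroot, RtoC_plus; ring).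
    rewrite E0, Cmod_0, Cmod_opp, Cmod_mult, !Cmod_R, !Rabs_pos_eq in Hx by lra.
    assert (c * Cmod (resid t) <= c * /48) by (apply Rmult_le_compat_l; lra). lra. }
  split; [exact Hcu|]. intros k Hk. destruct (Nat.eq_dec k i) as [->|Hki].
  - rewrite near_pow. intros E0. apply (Cmult_neq_0 _ _ Ai_pow_nonzero Hcu).
    replace (A i ^ Dd d i * (Complex.RtoC c * (1 + t) ^ Dd d i + 1))%C
      with (- (- (Complex.RtoC c * A i ^ Dd d i * (1 + t) ^ Dd d i) - A i ^ Dd d i))%C by ring.
    rewrite E0. ring.
  - destruct (Hsep k Hk) as [H1 [H2 H3]].
    apply (separated_nonvanishing d A i k w ka E Hw Hka H2 H3 Hki). lra.
Qed.

Lemma critical_point_near : exists t, Cmod t <= 2 * G /\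
    crit n d A (near w t) = 0%C /\
    near w t <> 0%C /\
    (forall k, (1 <= k <= n - 1)%nat -> (near w t ^ Dd d k - A k ^ Dd d k)%C <> 0%C) /\
    (Complex.RtoC (INR (d 1%nat) - 1) * near w t ^ d 1%nat + 1)%C <> 0%C.
Proof.
  destruct G_bounds as [Hlam HG].
  assert (HD1R : 1 <= INR (Dd d i)) by (apply (le_INR 1); auto).
  destruct (perturbed_root (Dd d i) (2 * G) resid HD1 ltac:(lra) ltac:(nra)) as [t [Ht Hroot]].
  { intros t Ht. assert (H := proj1 (resid_estimates t t Ht Ht)). nra. }
  { intros t t' Ht Ht'. assert (H := proj2 (resid_estimates t t' Ht Ht')).
    assert (0 <= Cmod (t - t')%C) by apply Cmod_ge_0. nra. }
  exists t. split; auto.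
  destruct (root_denominators t Ht Hroot) as [Hcu Hnz].
  split; [|split; [|split]]; auto.
  - rewrite (crit_decomp n d A i (near w t) Hi ltac:(intros; apply Hnz; auto)).
    unfold crit_term. rewrite sgn_succ by lia.
    unfold Dd at 1. rewrite plus_INR, RtoC_mult, RtoC_plus, RtoC_mult, RtoC_opp.
    apply (dominant_balance _ ((1 + t) ^ Dd d i)%C (A i ^ Dd d i)%C (near w t ^ Dd d i)%C
             (Complex.RtoC c) (Complex.RtoC (sgn i)) (Complex.RtoC (INR (d i)))
             (Complex.RtoC (INR (d (S i))))); auto using dS_nonzero, Ai_pow_nonzero, near_pow.
    + rewrite <- RtoC_mult, sgn_sq. reflexivity.
    + rewrite <- RtoC_mult, Hcd. reflexivity.
    + rewrite Hroot at 1. unfold resid. field. apply dS_nonzero.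
  - intros E0. destruct (near_bounds w t ltac:(lra)) as [Z1 _].
    rewrite E0, Cmod_0 in Z1. lra.
  - destruct (last_term_estimates d w ka M Hw Hka HL1 HL2 HL3) as [Hlast _]. apply Hlast. lra.
Qed.

End Core.

Lemma ln_le_mono x y : 0 < x -> x <= y -> ln x <= ln y.
Proof. intros Hx [H|H]; [left; now apply ln_increasing|subst; lra]. Qed.

Lemma exp_le_mono x y : x <= y -> exp x <= exp y.
Proof. intros [H|H]; [left; now apply exp_increasing|subst; lra]. Qed.

Lemma Rpower_pos x y : 0 < Rpower x y.
Proof. apply exp_pos. Qed.

Lemma Rpower_le_self s e : 0 < s <= 1 -> 1 <= e -> Rpower s e <= s.
Proof.
  intros [Hs Hs1] He. unfold Rpower.
  assert (ln s <= 0) by (rewrite <- ln_1; apply ln_le_mono; lra).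
  replace s with (exp (ln s)) at 2 by (apply exp_ln; lra). apply exp_le_mono. nra.
Qed.

Lemma Rpower_le_1 s e : 0 < s <= 1 -> 0 <= e -> Rpower s e <= 1.
Proof.
  intros [Hs Hs1] He. unfold Rpower.
  assert (ln s <= 0) by (rewrite <- ln_1; apply ln_le_mono; lra).
  rewrite <- exp_0. apply exp_le_mono. nra.
Qed.

Lemma Rpower_inv_pow x m : 0 < x -> (1 <= m)%nat -> (Rpower x (/ INR m)) ^ m = x.
Proof.
  intros Hx Hm. rewrite <- Rpower_pow by apply Rpower_pos.
  rewrite Rpower_mult, Rinv_l by (apply not_0_INR; lia). now apply Rpower_1.
Qed.

Lemma Rpower_inv_pow_le s d D : 0 < s <= 1 -> (1 <= d)%nat -> (d <= D)%nat ->
  (Rpower s (/ INR d)) ^ D <= s.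
Proof.
  intros Hs Hd HD. rewrite <- Rpower_pow by apply Rpower_pos.
  rewrite Rpower_mult. apply Rpower_le_self; auto.
  assert (1 <= INR d) by (apply (le_INR 1); auto).
  assert (INR d <= INR D) by (apply le_INR; auto).
  apply Rmult_le_reg_l with (INR d); [lra|]. rewrite <- Rmult_assoc, Rinv_r by lra. lra.
Qed.

Lemma Rpower_bounds c e m : 1 <= m -> / m <= c <= m -> 0 < e <= 1 ->
  / m <= Rpower c e <= m.
Proof.
  intros Hm [Hc1 Hc2] He.
  assert (Hm' : 0 < / m) by (apply Rinv_0_lt_compat; lra).
  assert (L1 : ln c <= ln m) by (apply ln_le_mono; lra).
  assert (L2 : ln (/ m) <= ln c) by (apply ln_le_mono; auto).
  rewrite ln_Rinv in L2 by lra.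
  assert (L0 : 0 <= ln m) by (rewrite <- ln_1; apply ln_le_mono; lra).
  unfold Rpower. split.
  - rewrite <- (exp_ln (/ m)) by lra. rewrite ln_Rinv by lra.
    apply exp_le_mono. destruct (Rle_dec 0 (ln c)); nra.
  - replace m with (exp (ln m)) at 1 by (apply exp_ln; lra). apply exp_le_mono. destruct (Rle_dec 0 (ln c)); nra.
Qed.

Lemma expi_mod th : Cmod (cos th, sin th) = 1.
Proof.
  unfold Cmod. simpl. transitivity (sqrt 1); [|apply sqrt_1]. f_equal.
  assert (H := sin2_cos2 th). unfold Rsqr in H. lra.
Qed.

Lemma expi_pow th m : ((cos th, sin th) ^ m)%C = (cos (INR m * th), sin (INR m * th)).
Proof.
  induction m.
  - simpl. rewrite Rmult_0_l, cos_0, sin_0. reflexivity.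
  - rewrite Cpow_S, IHm, S_INR.
    replace ((INR m + 1) * th) with (th + INR m * th) by ring.
    rewrite cos_plus, sin_plus. unfold Cmult. simpl. f_equal; ring.
Qed.

Lemma expi_root_minus_one (j D : nat) : (1 <= j)%nat -> (1 <= D)%nat ->
  ((cos (PI * (2 * INR j - 1) / INR D), sin (PI * (2 * INR j - 1) / INR D)) ^ D)%C = (- 1)%C.
Proof.
  intros Hj HD. rewrite expi_pow.
  assert (HD' : INR D <> 0) by (apply not_0_INR; lia).
  replace (INR D * (PI * (2 * INR j - 1) / INR D)) with (PI + 2 * INR (j - 1) * PI).
  - rewrite cos_period, sin_period, cos_PI, sin_PI.
    unfold Complex.Copp, Complex.RtoC. simpl. f_equal; ring.
  - rewrite minus_INR by lia. simpl. field. auto.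
Qed.

Lemma Rsum1_ge (f : nat -> R) N k : (forall m, (1 <= m <= N)%nat -> 0 <= f m) ->
  (1 <= k <= N)%nat -> f k <= Rsum1 f N.
Proof.
  intros Hf. induction N; intros Hk; [lia|]. simpl.
  assert (Hpos : 0 <= Rsum1 f N).
  { clear IHN Hk. induction N; simpl; [lra|].
    assert (0 <= f (S N)) by (apply Hf; lia).
    assert (0 <= Rsum1 f N) by (apply IHN; intros; apply Hf; lia). lra. }
  destruct (Nat.eq_dec k (S N)) as [->|Hne]; [lra|].
  assert (f k <= Rsum1 f N) by (apply IHN; [intros; apply Hf|]; lia).
  assert (0 <= f (S N)) by (apply Hf; lia). lra.
Qed.

Lemma nmax1_ge d N k : (1 <= k <= N)%nat -> (d k <= nmax1 d N)%nat.
Proof.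
  induction N; intros Hk; [lia|]. simpl.
  destruct (Nat.eq_dec k (S N)) as [->|Hne]; [lia|].
  specialize (IHN ltac:(lia)). lia.
Qed.

Lemma degrees_ge_2 n d : (forall i, (1 <= i <= n)%nat -> (1 <= d i)%nat) ->
  Rsum1 (fun i => / INR (d i)) n < 1 -> forall k, (1 <= k <= n)%nat -> (2 <= d k)%nat.
Proof.
  intros Hd Hsum k Hk.
  assert (Hpos : forall m, (1 <= m <= n)%nat -> 0 <= / INR (d m)).
  { intros m Hm. left. apply Rinv_0_lt_compat, lt_0_INR. specialize (Hd m Hm). lia. }
  assert (H := Rsum1_ge (fun i => / INR (d i)) n k Hpos Hk). simpl in H.
  destruct (Nat.le_gt_cases 2 (d k)) as [H2|H2]; auto.
  assert (H1 : d k = 1%nat) by (specialize (Hd k Hk); lia).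
  rewrite H1 in H. simpl in H. rewrite Rinv_1 in H. lra.
Qed.

(** * The configuration of the theorem *)

(** Constants depending only on [n] and [dm = max d_k]: [deg_bound] bounds
    every [D_k], [M] additionally bounds [c = d_(i+1)/d_i] and [1/c]; [K]
    measures the scale separation and [Gc] the size of the perturbation. *)
Definition deg_bound (dm : nat) : nat := (2 * dm)%nat.
Definition Mc (dm : nat) : R := INR (deg_bound dm).
Definition Kc (dm : nat) : R := Mc dm ^ (deg_bound dm + 3).
Definition Gc (n dm : nat) : R := 10 * INR n * Mc dm ^ 4 * 4 ^ deg_bound dm * Kc dm.
Definition s_threshold (n dm : nat) : R := / (48 * Mc dm * Gc n dm) ^ 2.

Lemma constants_ge_1 n dm : (2 <= dm)%nat -> (2 <= n)%nat ->
  4 <= Mc dm /\ 1 <= Kc dm /\ Kc dm <= Gc n dm.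
Proof.
  intros Hdm Hn. unfold Gc, Kc, Mc, deg_bound.
  assert (HM : 4 <= INR (2 * dm)).
  { rewrite mult_INR. assert (2 <= INR dm) by (apply (le_INR 2); lia). simpl. lra. }
  assert (HK : 1 <= INR (2 * dm) ^ (2 * dm + 3)) by (apply pow_R1_Rle; lra).
  assert (1 <= INR (2 * dm) ^ 4) by (apply pow_R1_Rle; lra).
  assert (1 <= 4 ^ (2 * dm)) by (apply pow_R1_Rle; lra).
  assert (2 <= INR n) by (apply (le_INR 2); lia).
  assert (1 <= 10 * INR n * INR (2 * dm) ^ 4 * 4 ^ (2 * dm)).
  { assert (1 <= INR (2 * dm) ^ 4 * 4 ^ (2 * dm)) by nra. nra. }
  repeat split; nra.
Qed.

Lemma s_threshold_pos n dm : (2 <= dm)%nat -> (2 <= n)%nat -> 0 < s_threshold n dm.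
Proof.
  intros Hdm Hn. destruct (constants_ge_1 n dm Hdm Hn) as [HM [HK HG]].
  apply Rinv_0_lt_compat, pow_lt. nra.
Qed.

Lemma pow_chain_bound x q y z M s D : 0 <= x <= q * y -> 0 <= q -> q ^ D <= s ->
  0 <= y <= M * z -> x ^ D <= M ^ D * s * z ^ D.
Proof.
  intros Hx Hq Hqs Hy.
  assert (H1 : x ^ D <= (q * y) ^ D) by (apply pow_incr; lra).
  assert (H2 : y ^ D <= (M * z) ^ D) by (apply pow_incr; lra).
  rewrite Rpow_mult_distr in H1, H2.
  assert (0 <= q ^ D) by (apply pow_le; auto).
  assert (0 <= y ^ D) by (apply pow_le; lra).
  assert (q ^ D * y ^ D <= s * (M ^ D * z ^ D)) by (apply Rmult_le_compat; lra).
  lra.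
Qed.

Definition approx_point (d : nat -> nat) (A : nat -> C) (i j : nat) : C :=
  (Complex.RtoC (Rpower (INR (d (S i)) / INR (d i)) (/ INR (Dd d i)))
   * (A i * (cos (PI * (2 * INR j - 1) / INR (Dd d i)),
             sin (PI * (2 * INR j - 1) / INR (Dd d i)))))%C.

Definition crit_point (n : nat) (d : nat -> nat) (A : nat -> C) (z : C) : Prop :=
  z <> 0%C /\
  (forall k, (1 <= k <= n - 1)%nat -> (z ^ Dd d k - A k ^ Dd d k)%C <> 0%C) /\
  (Complex.RtoC (INR (d 1%nat) - 1) * z ^ d 1%nat + 1)%C <> 0%C /\
  crit n d A z = 0%C.

Section Configuration.

Variables (n : nat) (d : nat -> nat) (A : nat -> C) (s : R).
Hypothesis Hn : (2 <= n)%nat.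
Hypothesis Hd2 : forall k, (1 <= k <= n)%nat -> (2 <= d k)%nat.
Hypothesis Hs : 0 < s.
Hypothesis Hs0 : s < s_threshold n (nmax1 d n).
Hypothesis HA1 : Cmod (A 1%nat) = Rpower (INR (nmax1 d n) ^ 2 * s) (/ INR (d 1%nat)).
Hypothesis HArec : forall k, (2 <= k <= n - 1)%nat ->
  Cmod (A k) = Rpower s (/ INR (d k)) * Cmod (A (k - 1)%nat).

Local Notation dm := (nmax1 d n).
Local Notation E := (deg_bound dm).
Local Notation M := (Mc dm).
Local Notation K := (Kc dm).

Lemma degrees_bounded k : (1 <= k <= n)%nat -> (2 <= d k <= dm)%nat.
Proof. intros Hk. split; [now apply Hd2|now apply nmax1_ge]. Qed.

Lemma dm_ge_2 : (2 <= dm)%nat.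
Proof. assert (H := degrees_bounded 1 ltac:(lia)). lia. Qed.

Lemma M_eq : M = 2 * INR dm.
Proof. unfold Mc, deg_bound. now rewrite mult_INR. Qed.

(** Below the threshold, [s <= 1] and [48 M Gc s < sqrt s]: the latter is
    what turns the [O(s)] displacement into the bound [sqrt s |a_i|]. *)
Lemma s_small : s <= 1 /\ 48 * M * (Gc n dm * s) < sqrt s.
Proof.
  destruct (constants_ge_1 n dm dm_ge_2 Hn) as [HM [HK HG]].
  set (X := 48 * M * Gc n dm). assert (HX : 48 <= X) by (unfold X; nra).
  assert (HsX : s * X ^ 2 < 1).
  { unfold s_threshold in Hs0. fold X in Hs0.
    apply (Rmult_lt_compat_r (X ^ 2)) in Hs0; [|apply pow_lt; lra].
    rewrite Rinv_l in Hs0 by (apply pow_nonzero; lra). lra. }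
  split; [simpl in HsX; nra|].
  assert (Hsq : sqrt s < / X).
  { rewrite <- (sqrt_pow2 X), <- sqrt_inv by lra. apply sqrt_lt_1_alt. split; [lra|].
    apply (Rmult_lt_reg_r (X ^ 2)); [apply pow_lt; lra|].
    rewrite Rinv_l by (apply pow_nonzero; lra). lra. }
  apply (Rmult_lt_compat_r X) in Hsq; [|lra]. rewrite Rinv_l in Hsq by lra.
  assert (sqrt s * sqrt s = s) by (apply sqrt_sqrt; lra).
  assert (0 < sqrt s) by (apply sqrt_lt_R0; lra). unfold X in Hsq. nra.
Qed.

Lemma norms_decreasing l k : (1 <= k <= l)%nat -> (l <= n - 1)%nat ->
  0 < Cmod (A l) /\ Cmod (A l) <= Cmod (A k).
Proof.
  assert (Hp : forall m, (2 <= m <= n - 1)%nat -> 0 < Rpower s (/ INR (d m)) <= 1).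
  { intros m Hm. split; [apply Rpower_pos|]. apply Rpower_le_1; [destruct s_small; lra|].
    left. apply Rinv_0_lt_compat, lt_0_INR. assert (H := Hd2 m ltac:(lia)). lia. }
  assert (HN1 : 0 < Cmod (A 1%nat)) by (rewrite HA1; apply Rpower_pos).
  revert k. induction l; intros k Hk Hl; [lia|].
  destruct (Nat.eq_dec k (S l)) as [->|Hne].
  - destruct l; [split; lra|].
    destruct (IHl 1%nat ltac:(lia) ltac:(lia)) as [Hpos _].
    rewrite HArec by lia. replace (S (S l) - 1)%nat with (S l) by lia.
    specialize (Hp (S (S l)) ltac:(lia)). split; [nra|lra].
  - destruct (IHl k ltac:(lia) ltac:(lia)) as [Hpos Hle].
    rewrite HArec by lia. replace (S l - 1)%nat with l by lia.
    specialize (Hp (S l) ltac:(lia)). split; nra.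
Qed.

Lemma M_pow_le_K m : (m <= E + 3)%nat -> M ^ m <= K.
Proof.
  intros Hm. destruct (constants_ge_1 n dm dm_ge_2 Hn) as [HM _].
  apply Rle_pow; [lra|exact Hm].
Qed.

(** A point [w] on the scale of [a_i] is separated from the other scales,
    because consecutive moduli differ by the factors [s^(1/d_k)]: for [k < i]
    it lies deep inside the circle [|z| = |a_k|] ... *)
Lemma inner_separation i k w : (1 <= k < i)%nat -> (i <= n - 1)%nat ->
  2 * Cmod w <= M * Cmod (A i) -> (2 * Cmod w) ^ Dd d k <= K * s * Cmod (A k ^ Dd d k)%C.
Proof.
  intros Hk Hi Hw.
  destruct (constants_ge_1 n dm dm_ge_2 Hn) as [HM _]. destruct s_small as [Hs1 _].
  assert (Hdk := degrees_bounded k ltac:(lia)). assert (HdSk := degrees_bounded (S k) ltac:(lia)).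
  destruct (norms_decreasing k k ltac:(lia) ltac:(lia)) as [HNk _].
  assert (H1 : Cmod (A i) <= Cmod (A (S k))) by (apply norms_decreasing; lia).
  rewrite (HArec (S k)) in H1 by lia. replace (S k - 1)%nat with k in H1 by lia.
  set (q := Rpower s (/ INR (d (S k)))) in H1.
  assert (Hq : 0 < q) by apply Rpower_pos.
  assert (Hqs : q ^ Dd d k <= s) by (apply Rpower_inv_pow_le; try lra; unfold Dd; lia).
  assert (H2 : (2 * Cmod w) ^ Dd d k <= M ^ Dd d k * s * Cmod (A k) ^ Dd d k).
  { apply (pow_chain_bound _ q (M * Cmod (A k))); try lra; [|split; nra].
    split; [assert (H := Cmod_ge_0 w); lra|].
    apply (Rle_trans _ _ _ Hw). replace (q * (M * Cmod (A k))) with (M * (q * Cmod (A k))) by ring.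
    apply Rmult_le_compat_l; lra. }
  assert (HK : M ^ Dd d k <= K) by (apply M_pow_le_K; unfold Dd, deg_bound in *; lia).
  assert (0 <= s * Cmod (A k) ^ Dd d k) by (apply Rmult_le_pos; [lra|apply pow_le; lra]).
  rewrite Cmod_pow. nra.
Qed.

(** ... and for [k > i] the circle [|z| = |a_k|] lies deep inside [|z| = |w|]. *)
Lemma outer_separation i k w : (1 <= i < k)%nat -> (k <= n - 1)%nat ->
  Cmod (A i) <= M * (Cmod w / 2) -> Cmod (A k ^ Dd d k)%C <= K * s * (Cmod w / 2) ^ Dd d k.
Proof.
  intros Hk Hi Hw.
  destruct (constants_ge_1 n dm dm_ge_2 Hn) as [HM _]. destruct s_small as [Hs1 _].
  assert (Hdk := degrees_bounded k ltac:(lia)). assert (HdSk := degrees_bounded (S k) ltac:(lia)).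
  assert (H1 : Cmod (A (k - 1)%nat) <= Cmod (A i)) by (apply norms_decreasing; lia).
  assert (Hw0 : 0 <= Cmod w / 2) by (assert (H := Cmod_ge_0 w); lra).
  set (q := Rpower s (/ INR (d k))).
  assert (Hq : 0 < q) by apply Rpower_pos.
  assert (Hqs : q ^ Dd d k <= s) by (apply Rpower_inv_pow_le; try lra; unfold Dd; lia).
  assert (H2 : Cmod (A k) ^ Dd d k <= M ^ Dd d k * s * (Cmod w / 2) ^ Dd d k).
  { apply (pow_chain_bound _ q (Cmod (A i))); try lra.
    - split; [apply Cmod_ge_0|]. rewrite HArec by lia. apply Rmult_le_compat_l; lra.
    - split; [apply Cmod_ge_0|lra]. }
  assert (HK : M ^ Dd d k <= K) by (apply M_pow_le_K; unfold Dd, deg_bound in *; lia).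
  assert (0 <= s * (Cmod w / 2) ^ Dd d k) by (apply Rmult_le_pos; [lra|apply pow_le; lra]).
  rewrite Cmod_pow. nra.
Qed.

Lemma scale_separation i w : (1 <= i <= n - 1)%nat ->
  / INR dm * Cmod (A i) <= Cmod w <= INR dm * Cmod (A i) ->
  forall k, (1 <= k <= n - 1)%nat ->
  INR (Dd d k) <= M /\ (1 <= Dd d k <= E)%nat /\ separated d A i k w (K * s).
Proof.
  intros Hi [Hw1 Hw2] k Hk.
  assert (Hdm : 2 <= INR dm) by (apply (le_INR 2), dm_ge_2).
  assert (Hdk := degrees_bounded k ltac:(lia)). assert (HdSk := degrees_bounded (S k) ltac:(lia)).
  split; [apply le_INR; unfold Dd, deg_bound; lia|]. split; [unfold Dd, deg_bound; lia|]. split.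
  - intros Hki. apply (inner_separation i); try lia. rewrite M_eq. lra.
  - intros Hik. apply (outer_separation i); try lia. rewrite M_eq.
    apply (Rmult_le_compat_l (INR dm)) in Hw1; [|lra].
    rewrite <- Rmult_assoc, Rinv_r, Rmult_1_l in Hw1 by lra. lra.
Qed.

(** The same separation for the last summand, whose scale is fixed by
    [|a_1|^(d_1) = dm^2 s]. *)
Lemma last_separation i w : (1 <= i <= n - 1)%nat -> Cmod w <= INR dm * Cmod (A i) ->
  (2 * Cmod w) ^ d 1%nat * (INR (d 1%nat) - 1) <= K * s.
Proof.
  intros Hi Hw.
  destruct (constants_ge_1 n dm dm_ge_2 Hn) as [HM _].
  assert (Hd1 := degrees_bounded 1 ltac:(lia)).
  assert (Hd1R : INR (d 1%nat) <= INR dm) by (apply le_INR; lia).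
  assert (Hd1R' : 2 <= INR (d 1%nat)) by (apply (le_INR 2); lia).
  assert (Hdm : 2 <= INR dm) by (apply (le_INR 2), dm_ge_2).
  assert (HN1i : Cmod (A i) <= Cmod (A 1%nat)) by (apply norms_decreasing; lia).
  assert (H0 : 0 <= 2 * Cmod w) by (assert (H := Cmod_ge_0 w); lra).
  assert (P1 : (2 * Cmod w) ^ d 1%nat <= M ^ d 1%nat * (INR dm ^ 2 * s)).
  { eapply Rle_trans; [apply pow_incr; split; [exact H0|]|].
    - assert (2 * Cmod w <= M * Cmod (A 1%nat)) by (rewrite M_eq; nra). exact H.
    - rewrite Rpow_mult_distr, HA1, Rpower_inv_pow by (lia || (apply Rmult_lt_0_compat; [apply pow_lt|]; lra)).
      lra. }
  assert (P2 : INR dm ^ 2 <= M ^ 2) by (apply pow_incr; rewrite M_eq; lra).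
  assert (P3 : M ^ (d 1%nat + 3) <= K) by (apply M_pow_le_K; unfold deg_bound; lia).
  rewrite pow_add in P3.
  assert (0 <= M ^ d 1%nat) by (apply pow_le; lra).
  assert (0 <= (2 * Cmod w) ^ d 1%nat) by (apply pow_le; lra).
  assert (P4 : (2 * Cmod w) ^ d 1%nat * (INR (d 1%nat) - 1) <= M ^ d 1%nat * (M ^ 2 * s) * M).
  { apply Rmult_le_compat; try lra.
    - eapply Rle_trans; [exact P1|]. apply Rmult_le_compat_l; [lra|]. nra.
    - rewrite M_eq. lra. }
  replace (M ^ d 1%nat * (M ^ 2 * s) * M) with (M ^ d 1%nat * M ^ 3 * s) in P4 by (simpl; ring).
  nra.
Qed.

Lemma degree_ratio_bounds i : (1 <= i <= n - 1)%nat ->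
  0 < INR (d (S i)) / INR (d i) /\ / INR dm <= INR (d (S i)) / INR (d i) <= INR dm.
Proof.
  intros Hi.
  assert (Hdi := degrees_bounded i ltac:(lia)). assert (HdSi := degrees_bounded (S i) ltac:(lia)).
  assert (Hdi2 : 2 <= INR (d i)) by (apply (le_INR 2); lia).
  assert (HdSi2 : 2 <= INR (d (S i))) by (apply (le_INR 2); lia).
  assert (HdSi3 : INR (d (S i)) <= INR dm) by (apply le_INR; lia).
  split; [apply Rdiv_lt_0_compat; lra|]. split.
  - assert (Hdi3 : INR (d i) <= INR dm) by (apply le_INR; lia).
    apply Rmult_le_reg_r with (INR dm * INR (d i)); [nra|].
    unfold Rdiv. field_simplify; lra || nra.
  - apply Rmult_le_reg_r with (INR (d i)); [lra|].
    unfold Rdiv. rewrite Rmult_assoc, Rinv_l by lra. nra.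
Qed.

Lemma approx_point_spec i j : (1 <= i <= n - 1)%nat -> (1 <= j)%nat ->
  / INR dm * Cmod (A i) <= Cmod (approx_point d A i j) <= INR dm * Cmod (A i) /\
  (approx_point d A i j ^ Dd d i
   = - (Complex.RtoC (INR (d (S i)) / INR (d i)) * A i ^ Dd d i))%C.
Proof.
  intros Hi Hj.
  assert (Hdi := degrees_bounded i ltac:(lia)). assert (HdSi := degrees_bounded (S i) ltac:(lia)).
  assert (Hdm : 2 <= INR dm) by (apply (le_INR 2), dm_ge_2).
  assert (HD1 : 1 <= INR (Dd d i)) by (apply (le_INR 1); unfold Dd; lia).
  destruct (degree_ratio_bounds i Hi) as [Hc0 Hc].
  set (c := INR (d (S i)) / INR (d i)) in *.
  assert (Hrho : / INR dm <= Rpower c (/ INR (Dd d i)) <= INR dm).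
  { apply Rpower_bounds; try lra. split; [apply Rinv_0_lt_compat; lra|].
    rewrite <- Rinv_1. apply Rinv_le_contravar; lra. }
  unfold approx_point. fold c. split.
  - rewrite !Cmod_mult, expi_mod, Cmod_R, Rabs_pos_eq, Rmult_1_r by (left; apply Rpower_pos).
    assert (H := Cmod_ge_0 (A i)). split; apply Rmult_le_compat_r; lra.
  - rewrite !Cpow_mult_l, <- RtoC_pow, Rpower_inv_pow, expi_root_minus_one by (unfold Dd; lia || lra).
    ring.
Qed.

Lemma critical_point_close i j : (1 <= i <= n - 1)%nat -> (1 <= j <= Dd d i)%nat ->
  exists z, crit_point n d A z /\
    Cmod (z - approx_point d A i j)%C < sqrt s * Cmod (A i).
Proof.
  intros Hi Hj.
  destruct (constants_ge_1 n dm dm_ge_2 Hn) as [HM [HK HKG]].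
  destruct s_small as [Hs1 Hsq].
  assert (HsqR : sqrt s <= 1) by (rewrite <- sqrt_1; apply sqrt_le_1_alt; lra).
  assert (HGs0 : 0 <= Gc n dm * s) by nra.
  assert (HGs : 48 * (Gc n dm * s) <= 1) by nra.
  destruct (approx_point_spec i j Hi ltac:(lia)) as [[Hw1 Hw2] Hwpow].
  set (w := approx_point d A i j) in *.
  assert (Hdi := degrees_bounded i ltac:(lia)). assert (HdSi := degrees_bounded (S i) ltac:(lia)).
  assert (Hdm : 2 <= INR dm) by (apply (le_INR 2), dm_ge_2).
  assert (HNi := proj1 (norms_decreasing i i ltac:(lia) ltac:(lia))).
  assert (Hw0 : 0 < Cmod w).
  { assert (0 < / INR dm) by (apply Rinv_0_lt_compat; lra). nra. }
  assert (Hdi0 : 0 < INR (d i)) by (apply lt_0_INR; lia).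
  assert (Hc : 0 < INR (d (S i)) / INR (d i) <= M)
    by (destruct (degree_ratio_bounds i Hi); rewrite M_eq; lra).
  (* Apply [critical_point_near] with [c = d_(i+1)/d_i], [ka = K s] and
     [G = Gc s]; the last goal bounds the displacement [|w t| <= 2 dm Gc s |a_i|]. *)
  destruct (critical_point_near n d A i w (INR (d (S i)) / INR (d i)) (K * s) M
              (Gc n dm * s) E Hi Hn Hw0 Hwpow Hc) as [t [Ht [Hcrit [Hz0 [Hnz Hlast]]]]];
    try lia.
  - field. lra.
  - split; nra.
  - lra.
  - apply le_INR. unfold Dd, deg_bound. lia.
  - intros k Hk. now apply (scale_separation i w).
  - assert (Hd1 := degrees_bounded 1 ltac:(lia)).
    rewrite M_eq. assert (INR (d 1%nat) <= INR dm) by (apply le_INR; lia). lra.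
  - exact (proj1 (degrees_bounded 1 ltac:(lia))).
  - now apply (last_separation i w).
  - unfold Gc. right. ring.
  - nra.
  - exists (near w t). split; [repeat split; auto|].
    replace (near w t - w)%C with (w * t)%C by (unfold near; ring).
    rewrite Cmod_mult.
    assert (H1 : Cmod w * Cmod t <= INR dm * Cmod (A i) * (2 * (Gc n dm * s)))
      by (apply Rmult_le_compat; auto using Cmod_ge_0).
    rewrite M_eq in Hsq. nra.
Qed.

End Configuration.

Definition fromC (z : C) : Cx := mkC (fst z) (snd z).

Lemma toC_fromC z : toC (fromC z) = z.
Proof. destruct z. reflexivity. Qed.

Lemma is_crit_point_fromC n d a z :
  crit_point n d (fun k => toC (a k)) z -> is_crit_point n d a (fromC z).
Proof.
  intros [Hz0 [Hnz [Hlast Hcrit]]]. split; [|split; [|split]].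
  - intros E. apply Hz0. now rewrite <- (toC_fromC z), E.
  - intros k Hk E. apply (Hnz k Hk).
    apply (f_equal toC) in E. now rewrite toC_sub, !toC_pow, toC_fromC in E.
  - intros E. apply Hlast. apply (f_equal toC) in E.
    now rewrite toC_add, toC_mul, toC_pow, toC_RtoC, toC_fromC, toC_C1 in E.
  - apply toC_inj. now rewrite crit_toC, toC_fromC.
Qed.

Theorem lemma2p8 (n : nat) (d : nat -> nat)
  (Hn : (2 <= n)%nat)
  (Hd : forall i, (1 <= i <= n)%nat -> (1 <= d i)%nat)
  (Hsum : Rsum1 (fun i => / INR (d i)) n < 1) :
  exists s0 : R, 0 < s0 /\
  forall (s : R) (a : nat -> Cx),
    0 < s -> s < s0 ->
    Cnorm (a 1%nat) = Rpower (INR (nmax1 d n) ^ 2 * s) (/ INR (d 1%nat)) ->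
    (forall i, (2 <= i <= n - 1)%nat ->
       Cnorm (a i) = Rpower s (/ INR (d i)) * Cnorm (a (i - 1)%nat)) ->
    forall i j : nat, (1 <= i <= n - 1)%nat -> (1 <= j <= Dd d i)%nat ->
    exists w : Cx,
      is_crit_point n d a w /\
      Cnorm (Csub w
        (Cmul (RtoC (Rpower (INR (d (S i)) / INR (d i)) (/ INR (Dd d i))))
          (Cmul (a i) (Cexpi (PI * (2 * INR j - 1) / INR (Dd d i))))))
      < sqrt s * Cnorm (a i).
Proof.
  assert (Hd2 := degrees_ge_2 n d Hd Hsum).
  exists (s_threshold n (nmax1 d n)).
  split; [apply s_threshold_pos; auto using dm_ge_2|].
  intros s a Hs Hs0 Ha1 Hai i j Hi Hj.
  destruct (critical_point_close n d (fun k => toC (a k)) s Hn Hd2 Hs Hs0) with i j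
    as [z [Hz Hclose]]; auto.
  - now rewrite <- Cnorm_toC.
  - intros k Hk. rewrite <- !Cnorm_toC. now apply Hai.
  - exists (fromC z). split; [now apply is_crit_point_fromC|].
    rewrite !Cnorm_toC, toC_sub, !toC_mul, toC_RtoC, toC_expi, toC_fromC. exact Hclose.
Qed.
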